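(* Let $\phi_\mathcal{D}(z)$ be a power series with non-negative coefficients, $[z^0]\phi_\mathcal{D}>0$ and $[z^k]\phi_\mathcal{D}>0$ for some $k\ge2$, let $D(z)$ be the unique power series with $D(z)=z\,\phi_\mathcal{D}(D(z))$, and let $\phi(z)=1/(1-D(z))$. Types of $\phi_\mathcal{D}$ and of $\phi$ refer to the types of their coefficient sequences. (1) If $\phi_\mathcal{D}$ has type I, then $\phi$ has type I$a$ with $\nu=\infty$. (2) Suppose $\phi_\mathcal{D}$ has type II; let $\tau_\mathcal{D}$ be the radius of convergence of $\phi_\mathcal{D}$ and $\nu_\mathcal{D}=\lim_{t\uparrow\tau_\mathcal{D}}t\phi_\mathcal{D}'(t)/\phi_\mathcal{D}(t)\in(0,1)$. (a) If $\tau_\mathcal{D}<1$, then the parameter $\nu$ of $\phi$ equals $\nu=\frac{\tau_\mathcal{D}}{(1-\tau_\mathcal{D})(1-\nu_\mathcal{D})}\in(0,\infty)$. (b) If $\tau_\mathcal{D}\ge1$, then $\phi$ has type I$a$ with $\nu=\infty$. (3) If $\phi_\mathcal{D}$ has type III, then $\nu=0$, i.e. $\phi$ has type III.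
   Context: (Combinatorially, $\phi_\mathcal{D}$ is the generating series of the weighted $\textsc{SEQ}\circ\textsc{SEQ}_{\ge1}$-structures defining face-weighted dissections $D(z)$, and $\phi$ that of sequences of dissections, governing random outerplanar maps.) Types of a weight sequence $(\omega_k)_{k\ge0}$ with $\omega_0>0$ and $\omega_k>0$ for some $k\ge2$ and generating series $\Phi(z)=\sum\omega_kz^k$ of radius $\rho$: if $\rho>0$, $\Psi(t)=t\Phi'(t)/\Phi(t)$ on $[0,\rho)$ and $\nu=\lim_{t\uparrow\rho}\Psi(t)\in(0,\infty]$; if $\rho=0$, $\nu=0$. Type I: $\nu\ge1$; type I$a$: $\nu>1$; type II: $0<\nu<1$; type III: $\nu=0$. Here $\nu$ without subscript refers to $\Phi=\phi$. *)

From Stdlib Require Import Reals Lra Classical ClassicalEpsilon.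
Open Scope R_scope.

Definition ps := nat -> R.

Definition ps_one : ps := fun n => match n with O => 1 | S _ => 0 end.

Definition ps_mul (a b : ps) : ps :=
  fun n => sum_f_R0 (fun k => a k * b (n - k)%nat) n.

Fixpoint ps_pow (a : ps) (k : nat) : ps :=
  match k with O => ps_one | S k' => ps_mul a (ps_pow a k') end.

(** Composition f(g(z)), meaningful when g 0 = 0 (then [z^n] g^k = 0 for k > n). *)
Definition ps_comp (f g : ps) : ps :=
  fun n => sum_f_R0 (fun k => f k * ps_pow g k n) n.

(** D(z) = z * phiD(D(z)) as formal power series. *)
Definition is_D_series (phiD d : ps) : Prop :=
  d O = 0 /\ forall n, d (S n) = ps_comp phiD d n.

(** phi(z) = 1/(1 - D(z)) = sum_k D(z)^k  (D has zero constant term). *)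
Definition phi_of (d : ps) : ps :=
  fun n => sum_f_R0 (fun k => ps_pow d k n) n.

Definition weight_seq (w : ps) : Prop :=
  (forall n, 0 <= w n) /\ 0 < w O /\ exists k, (2 <= k)%nat /\ 0 < w k.

Inductive ext := Fin (x : R) | PInf.

Definition ext_ge (a b : ext) : Prop :=
  match a, b with
  | PInf, _ => True
  | Fin _, PInf => False
  | Fin x, Fin y => y <= x
  end.

Definition ext_gt (a b : ext) : Prop :=
  match a, b with
  | PInf, Fin _ => True
  | PInf, PInf => False
  | Fin _, PInf => False
  | Fin x, Fin y => y < x
  end.

Definition ps_conv (w : ps) (t : R) : Prop :=
  exists l, infinite_sum (fun n => w n * t ^ n) l.

Definition is_radius (w : ps) (r : ext) : Prop :=
  match r with
  | Fin rho => 0 <= rho /\ (forall t, 0 <= t < rho -> ps_conv w t)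
                        /\ (forall t, rho < t -> ~ ps_conv w t)
  | PInf => forall t, 0 <= t -> ps_conv w t
  end.

(** Value of a convergent series (junk value otherwise). *)
Definition sumR (u : nat -> R) : R :=
  epsilon (inhabits 0) (fun l => infinite_sum u l).

(** Phi(t) = sum w_n t^n and t Phi'(t) = sum n w_n t^n (termwise derivative). *)
Definition PhiR (w : ps) (t : R) : R := sumR (fun n => w n * t ^ n).
Definition tDPhiR (w : ps) (t : R) : R := sumR (fun n => INR n * w n * t ^ n).
Definition Psi (w : ps) (t : R) : R := tDPhiR w t / PhiR w t.

Definition left_lim (rho : ext) (f : R -> R) (L : ext) : Prop :=
  match rho, L with
  | Fin r, Fin l => forall eps, 0 < eps -> exists del, 0 < del /\
        forall t, r - del < t < r -> Rabs (f t - l) < eps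
  | Fin r, PInf => forall M, exists del, 0 < del /\
        forall t, r - del < t < r -> M < f t
  | PInf, Fin l => forall eps, 0 < eps -> exists A,
        forall t, A < t -> Rabs (f t - l) < eps
  | PInf, PInf => forall M, exists A, forall t, A < t -> M < f t
  end.

Definition nu_param (w : ps) (nu : ext) : Prop :=
  (is_radius w (Fin 0) /\ nu = Fin 0) \/
  (exists rho, is_radius w rho /\ rho <> Fin 0 /\ left_lim rho (Psi w) nu).

Definition typeI (w : ps) : Prop := exists nu, nu_param w nu /\ ext_ge nu (Fin 1).
Definition typeIa (w : ps) : Prop := exists nu, nu_param w nu /\ ext_gt nu (Fin 1).
Definition typeII (w : ps) : Prop :=
  exists nu, nu_param w nu /\ ext_gt nu (Fin 0) /\ ext_gt (Fin 1) nu.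
Definition typeIII (w : ps) : Prop := nu_param w (Fin 0).

From Stdlib Require Import Reals Lra Lia Arith Classical ClassicalEpsilon FunctionalExtensionality.
From Coquelicot Require Import Coquelicot.
Open Scope R_scope.

(* D(x) = x F(D(x)) wherever D converges, and D converges at x as soon as some y satisfies
   x F(y) <= y; phi = 1/(1 - D) converges exactly where D(x) < 1.  Differentiating the fixpoint
   equation, below the radius rho of phi
     Psi_phi(x) = D(x) / ((1 - D(x)) (1 - Psi_F(D(x)))),   with 0 <= Psi_F(D(x)) < 1.
   As x increases to rho, D(x) increases to some delta <= 1.  If delta = 1, Psi_phi blows up.
   If F still converges beyond delta, the maximality of rho forces Psi_F >= 1 just beyond delta,
   hence Psi_F(delta) >= 1 and again Psi_phi blows up.  Otherwise delta is the radius tau_D of F and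
   Psi_F(D(x)) tends to nu_D, giving the limit tau_D / ((1 - tau_D) (1 - nu_D)) when nu_D < 1
   (and nu_D < 1 also rules out delta < tau_D, since Psi_F >= 1 propagates to the right).
   In type III, Psi_F stays away from 0, so F has radius 0, and so has phi. *)


Lemma sum_f_R0_nonneg_upto (f : nat -> R) (N : nat) :
  (forall i, (i <= N)%nat -> 0 <= f i) -> 0 <= sum_f_R0 f N.
Proof.
  induction N as [|N IH]; intros H; simpl.
  - apply H; lia.
  - assert (0 <= sum_f_R0 f N) by (apply IH; intros; apply H; lia).
    assert (0 <= f (S N)) by (apply H; lia). lra.
Qed.

Lemma sum_f_R0_le_index (f : nat -> R) (N M : nat) :
  (forall i, 0 <= f i) -> (N <= M)%nat -> sum_f_R0 f N <= sum_f_R0 f M.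
Proof.
  intros Hf Hle. induction Hle as [|M Hle IH]; simpl; [lra|].
  specialize (Hf (S M)). lra.
Qed.

Lemma sum_f_R0_ge_term (f : nat -> R) i N :
  (forall k, 0 <= f k) -> (i <= N)%nat -> f i <= sum_f_R0 f N.
Proof.
  intros Hf Hi. eapply Rle_trans; [|apply (sum_f_R0_le_index f i N); auto].
  destruct i; simpl; [lra|].
  generalize (sum_f_R0_nonneg_upto f i (fun k _ => Hf k)). lra.
Qed.

Lemma sum_f_R0_ge_first_and_term (f : nat -> R) k :
  (forall n, 0 <= f n) -> (1 <= k)%nat -> f O + f k <= sum_f_R0 f k.
Proof.
  intros Hf Hk. destruct k as [|k]; [lia|]. rewrite tech5.
  pose proof (sum_f_R0_ge_term f 0 k Hf ltac:(lia)). lra.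
Qed.

Lemma sum_f_R0_vanishing_tail (f : nat -> R) (n K : nat) :
  (forall k, (n < k)%nat -> f k = 0) -> (n <= K)%nat -> sum_f_R0 f K = sum_f_R0 f n.
Proof.
  intros Hz Hle. induction Hle as [|K Hle IH]; [reflexivity|].
  simpl. rewrite IH, Hz by lia. ring.
Qed.

Lemma sum_f_R0_le_vanishing_tail (f : nat -> R) (n K : nat) :
  (forall k, 0 <= f k) -> (forall k, (n < k)%nat -> f k = 0) ->
  sum_f_R0 f K <= sum_f_R0 f n.
Proof.
  intros Hf Hz. destruct (le_lt_dec K n) as [H|H].
  - apply sum_f_R0_le_index; auto.
  - rewrite (sum_f_R0_vanishing_tail f n K); auto; [lra|lia].
Qed.

Lemma sum_f_R0_swap (h : nat -> nat -> R) (N M : nat) :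
  sum_f_R0 (fun n => sum_f_R0 (fun k => h k n) M) N =
  sum_f_R0 (fun k => sum_f_R0 (fun n => h k n) N) M.
Proof.
  induction N as [|N IH]; simpl; [reflexivity|].
  rewrite IH, <- sum_plus. reflexivity.
Qed.

Lemma sum_f_R0_shift (f : nat -> R) (N : nat) :
  sum_f_R0 f (S N) = f O + sum_f_R0 (fun i => f (S i)) N.
Proof.
  induction N as [|N IH]; [simpl; ring|].
  rewrite tech5, IH. simpl. ring.
Qed.

Lemma sum_f_R0_mult_l (c : R) (f : nat -> R) (N : nat) :
  sum_f_R0 (fun i => c * f i) N = c * sum_f_R0 f N.
Proof. rewrite scal_sum. apply sum_eq. intros; ring. Qed.

Lemma finite_support_infinite_sum (u : nat -> R) M :
  (forall n, (M < n)%nat -> u n = 0) -> infinite_sum u (sum_f_R0 u M).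
Proof.
  intros Hz eps Heps. exists M. intros n Hn. unfold R_dist.
  rewrite (sum_f_R0_vanishing_tail u M n); auto. rewrite Rminus_diag, Rabs_R0. lra.
Qed.

Lemma ps_pow_1 (a : ps) n : ps_pow a 1 n = a n.
Proof.
  simpl. unfold ps_mul. destruct n as [|n].
  - simpl. unfold ps_one. ring.
  - rewrite tech5, sum_eq_R0.
    + rewrite Nat.sub_diag. unfold ps_one. ring.
    + intros i Hi. replace (S n - i)%nat with (S (n - i)) by lia. unfold ps_one. ring.
Qed.

Lemma ps_pow_low_coef_zero (a : ps) : a O = 0 ->
  forall k n, (n < k)%nat -> ps_pow a k n = 0.
Proof.
  intros Ha0 k. induction k as [|k IH]; intros n Hn; [lia|].
  simpl. unfold ps_mul. apply sum_eq_R0. intros [|i] Hi.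
  - rewrite Ha0. ring.
  - rewrite IH by lia. ring.
Qed.

Lemma ps_pow_ext_upto (a b : ps) (N : nat) :
  (forall i, (i <= N)%nat -> a i = b i) ->
  forall k n, (n <= N)%nat -> ps_pow a k n = ps_pow b k n.
Proof.
  intros Hab k. induction k as [|k IH]; intros n Hn; [reflexivity|].
  simpl. unfold ps_mul. apply sum_eq. intros i Hi.
  rewrite Hab, IH by lia. reflexivity.
Qed.

Lemma ps_pow_nonneg_upto (a : ps) (N : nat) :
  (forall i, (i <= N)%nat -> 0 <= a i) ->
  forall k n, (n <= N)%nat -> 0 <= ps_pow a k n.
Proof.
  intros Ha k. induction k as [|k IH]; intros n Hn.
  - simpl. unfold ps_one. destruct n; lra.
  - simpl. unfold ps_mul. apply sum_f_R0_nonneg_upto. intros i Hi.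
    apply Rmult_le_pos; [apply Ha|apply IH]; lia.
Qed.

Lemma ps_pow_nonneg (a : ps) : (forall i, 0 <= a i) -> forall k n, 0 <= ps_pow a k n.
Proof. intros Ha k n. apply (ps_pow_nonneg_upto a n); auto. Qed.

Lemma ps_pow_le_compat (a b : ps) : (forall i, 0 <= a i <= b i) ->
  forall k n, ps_pow a k n <= ps_pow b k n.
Proof.
  intros Hab k. induction k as [|k IH]; intros n; simpl; [lra|].
  unfold ps_mul. apply sum_Rle. intros i Hi.
  apply Rmult_le_compat; try apply Hab; auto.
  apply ps_pow_nonneg. intros j; apply Hab.
Qed.

Lemma ps_pow_finite_support (a : ps) M : (forall n, (M < n)%nat -> a n = 0) ->
  forall k n, (k * M < n)%nat -> ps_pow a k n = 0.
Proof.
  intros Hz k. induction k as [|k IH]; intros n Hn.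
  - simpl. unfold ps_one. destruct n; [lia|auto].
  - simpl. unfold ps_mul. apply sum_eq_R0. intros i Hi.
    destruct (le_lt_dec i M).
    + rewrite IH by nia. ring.
    + rewrite Hz by lia. ring.
Qed.

Definition ps_trunc (g : ps) (M : nat) : ps := fun n => if (n <=? M)%nat then g n else 0.

Lemma ps_trunc_high g M n : (M < n)%nat -> ps_trunc g M n = 0.
Proof. intros H. unfold ps_trunc. destruct (Nat.leb_spec n M); [lia|auto]. Qed.

Lemma ps_trunc_low g M n : (n <= M)%nat -> ps_trunc g M n = g n.
Proof. intros H. unfold ps_trunc. destruct (Nat.leb_spec n M); [auto|lia]. Qed.

Lemma ps_trunc_bounds g M n : (forall i, 0 <= g i) -> 0 <= ps_trunc g M n <= g n.
Proof. intros Hg. unfold ps_trunc. destruct (Nat.leb_spec n M); split; auto; try lra; apply Hg. Qed.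

Definition ps_term (a : ps) (t : R) : nat -> R := fun n => a n * t ^ n.

Lemma sumR_eq u l : infinite_sum u l -> sumR u = l.
Proof.
  intros H. unfold sumR.
  assert (Hex : exists l, infinite_sum u l) by (exists l; auto).
  eapply uniqueness_sum; [|exact H].
  exact (epsilon_spec (inhabits 0) (fun l => infinite_sum u l) Hex).
Qed.

Lemma PhiR_eq a t l : infinite_sum (ps_term a t) l -> PhiR a t = l.
Proof. exact (sumR_eq (ps_term a t) l). Qed.

Lemma PhiR_spec a t : ps_conv a t -> infinite_sum (ps_term a t) (PhiR a t).
Proof. intros [l Hl]. rewrite (PhiR_eq a t l Hl). exact Hl. Qed.

Lemma Un_cv_le_const (u : nat -> R) l M : Un_cv u l -> (forall n, u n <= M) -> l <= M.
Proof.
  intros Hu HM. apply is_lim_seq_Reals in Hu.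
  exact (is_lim_seq_le u (fun _ => M) l M HM Hu (is_lim_seq_const M)).
Qed.

Lemma Un_cv_le (u v : nat -> R) l1 l2 :
  Un_cv u l1 -> Un_cv v l2 -> (forall n, u n <= v n) -> l1 <= l2.
Proof.
  intros Hu Hv H. apply is_lim_seq_Reals in Hu. apply is_lim_seq_Reals in Hv.
  exact (is_lim_seq_le u v l1 l2 H Hu Hv).
Qed.

Section NonnegSeries.
Variable a : ps.
Hypothesis Ha : forall n, 0 <= a n.

Lemma ps_term_nonneg t : 0 <= t -> forall n, 0 <= ps_term a t n.
Proof. intros Ht n. apply Rmult_le_pos; auto. apply pow_le; auto. Qed.

Lemma ps_conv_of_bounded_partial t M : 0 <= t ->
  (forall N, sum_f_R0 (ps_term a t) N <= M) -> ps_conv a t /\ PhiR a t <= M.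
Proof.
  intros Ht HM.
  assert (Hg : Un_growing (fun N => sum_f_R0 (ps_term a t) N)).
  { intros n. simpl. pose proof (ps_term_nonneg t Ht (S n)). lra. }
  assert (Hb : has_ub (fun N => sum_f_R0 (ps_term a t) N)).
  { exists M. intros x [n ->]. apply HM. }
  destruct (growing_cv _ Hg Hb) as [l Hl].
  split; [exists l; exact Hl|].
  rewrite (PhiR_eq a t l Hl). eapply Un_cv_le_const; eauto.
Qed.

Lemma partial_sum_le_PhiR t N : 0 <= t -> ps_conv a t ->
  sum_f_R0 (ps_term a t) N <= PhiR a t.
Proof. intros Ht Hc. apply sum_incr; [apply PhiR_spec|apply ps_term_nonneg]; auto. Qed.

Lemma PhiR_ge_partial_sum t M N : 0 <= t -> ps_conv a t ->
  M <= sum_f_R0 (ps_term a t) N -> M <= PhiR a t.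
Proof. intros Ht Hc HM. eapply Rle_trans; eauto. apply partial_sum_le_PhiR; auto. Qed.

Lemma PhiR_nonneg t : 0 <= t -> ps_conv a t -> 0 <= PhiR a t.
Proof.
  intros Ht Hc. apply (PhiR_ge_partial_sum t _ O Ht Hc). apply ps_term_nonneg; auto.
Qed.

Lemma PhiR_ge_coef0 t : 0 <= t -> ps_conv a t -> a O <= PhiR a t.
Proof.
  intros Ht Hc. apply (PhiR_ge_partial_sum t _ O Ht Hc). unfold ps_term. simpl. lra.
Qed.

Lemma ps_conv_le_t s t : 0 <= s <= t -> ps_conv a t ->
  ps_conv a s /\ PhiR a s <= PhiR a t.
Proof.
  intros Hst Hc. apply ps_conv_of_bounded_partial; [lra|]. intros N.
  eapply Rle_trans; [|apply (partial_sum_le_PhiR t N); auto; lra].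
  apply sum_Rle. intros n _. apply Rmult_le_compat_l; auto. apply pow_incr. lra.
Qed.

(* The coefficient of [t^1] alone gives a linear lower bound on the increments. *)
Lemma PhiR_increment_ge s t : 0 <= s < t -> ps_conv a t ->
  ps_conv a s /\ PhiR a s + a 1%nat * (t - s) <= PhiR a t.
Proof.
  intros Hst Hc.
  destruct (ps_conv_le_t s t ltac:(lra) Hc) as [Hcs _]. split; auto.
  set (u := fun n => ps_term a t n - ps_term a s n).
  assert (Hu : infinite_sum u (PhiR a t - PhiR a s)).
  { unfold infinite_sum. apply is_lim_seq_Reals.
    apply (is_lim_seq_ext (fun N => sum_f_R0 (ps_term a t) N - sum_f_R0 (ps_term a s) N)).
    - intros N. unfold u. rewrite minus_sum. auto.
    - apply is_lim_seq_minus'; apply is_lim_seq_Reals; apply PhiR_spec; auto. }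
  assert (Hun : forall n, 0 <= u n).
  { intros n. unfold u, ps_term. assert (s ^ n <= t ^ n) by (apply pow_incr; lra).
    generalize (Ha n); nra. }
  pose proof (sum_incr u 1 _ Hu Hun) as H. unfold u, ps_term in H. simpl in H. lra.
Qed.

End NonnegSeries.

Lemma ps_conv_le_coef a b t : (forall n, 0 <= a n <= b n) -> 0 <= t -> ps_conv b t ->
  ps_conv a t /\ PhiR a t <= PhiR b t.
Proof.
  intros Hab Ht Hc.
  assert (Hb : forall n, 0 <= b n) by (intros n; generalize (Hab n); lra).
  apply ps_conv_of_bounded_partial; auto; [intros n; apply Hab|]. intros N.
  eapply Rle_trans; [|apply (partial_sum_le_PhiR b Hb t N); auto].
  apply sum_Rle. intros n _. apply Rmult_le_compat_r; [apply pow_le; auto|apply Hab].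
Qed.

Lemma is_pseries_ps_term a x l : is_pseries a x l <-> infinite_sum (ps_term a x) l.
Proof.
  unfold is_pseries. rewrite <- is_series_Reals.
  assert (E : forall n, scal (pow_n x n) (a n) = ps_term a x n).
  { intros n. unfold ps_term. rewrite pow_n_pow. unfold scal; simpl; unfold mult; simpl. ring. }
  split; intros H; [apply (is_series_ext _ _ l E H)|apply (is_series_ext (ps_term a x)); auto].
Qed.

Lemma CV_disk_le_CV_radius a r : CV_disk a r -> Rbar_le r (CV_radius a).
Proof.
  intros H. unfold CV_radius. destruct (Lub_Rbar_correct (CV_disk a)) as [Hub _]. apply Hub; auto.
Qed.

Lemma Rabs_lt_CV_radius a y r : (forall n, 0 <= a n) -> Rabs y < r -> ps_conv a r ->
  Rbar_lt (Rabs y) (CV_radius a).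
Proof.
  intros Ha Hy [l Hl].
  assert (Hr : 0 <= r) by (pose proof (Rabs_pos y); lra).
  assert (Hd : CV_disk a r).
  { exists l. apply (is_series_ext (ps_term a r)); [|apply is_series_Reals; auto].
    intros n. unfold ps_term. rewrite Rabs_pos_eq; auto.
    apply Rmult_le_pos; auto. apply pow_le; lra. }
  eapply Rbar_lt_le_trans; [|apply CV_disk_le_CV_radius, Hd]. simpl. lra.
Qed.

Lemma finite_support_CV_radius a M : (forall n, (M < n)%nat -> a n = 0) ->
  forall t, Rbar_lt (Rabs t) (CV_radius a).
Proof.
  intros Hz t.
  assert (Hd : CV_disk a (Rabs t + 1)).
  { exists (sum_f_R0 (fun n => Rabs (a n * (Rabs t + 1) ^ n)) M).
    apply is_series_Reals, finite_support_infinite_sum. intros n Hn.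
    rewrite Hz, Rmult_0_l, Rabs_R0; auto. }
  eapply Rbar_lt_le_trans; [|apply CV_disk_le_CV_radius, Hd]. simpl. lra.
Qed.

Lemma PSeries_infinite_sum a t : Rbar_lt (Rabs t) (CV_radius a) ->
  infinite_sum (ps_term a t) (PSeries a t).
Proof.
  intros H. apply CV_radius_inside in H as [l Hl].
  apply is_pseries_ps_term in Hl. apply is_series_Reals in Hl.
  unfold PSeries. change (fun k => a k * t ^ k) with (ps_term a t).
  rewrite (is_series_unique _ _ Hl). apply is_series_Reals, Hl.
Qed.

Lemma PhiR_PSeries a t : Rbar_lt (Rabs t) (CV_radius a) ->
  ps_conv a t /\ PhiR a t = PSeries a t.
Proof.
  intros H. pose proof (PSeries_infinite_sum a t H).
  split; [exists (PSeries a t); auto|apply PhiR_eq; auto].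
Qed.

Lemma tDPhiR_infinite_sum a t : Rbar_lt (Rabs t) (CV_radius a) ->
  infinite_sum (fun n => INR n * a n * t ^ n) (t * PSeries (PS_derive a) t).
Proof.
  intros H. rewrite <- CV_radius_derive in H. apply PSeries_infinite_sum in H.
  unfold infinite_sum. apply is_lim_seq_Reals, is_lim_seq_incr_1.
  apply (is_lim_seq_ext (fun N => t * sum_f_R0 (ps_term (PS_derive a) t) N)).
  - intros N. rewrite sum_f_R0_shift. simpl. rewrite !Rmult_0_l, Rplus_0_l.
    rewrite <- sum_f_R0_mult_l. apply sum_eq. intros i _. unfold ps_term, PS_derive. simpl. ring.
  - apply (is_lim_seq_scal_l _ t (Finite _)). apply is_lim_seq_Reals. exact H.
Qed.

Lemma tDPhiR_PSeries a t : Rbar_lt (Rabs t) (CV_radius a) ->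
  tDPhiR a t = t * PSeries (PS_derive a) t.
Proof. intros H. apply sumR_eq, tDPhiR_infinite_sum, H. Qed.

Lemma Psi_PSeries a t : Rbar_lt (Rabs t) (CV_radius a) ->
  Psi a t = t * PSeries (PS_derive a) t / PSeries a t.
Proof.
  intros H. unfold Psi. rewrite tDPhiR_PSeries by auto.
  destruct (PhiR_PSeries a t H) as [_ ->]. reflexivity.
Qed.

Lemma PSeries_nonneg a t : (forall n, 0 <= a n) -> 0 <= t -> Rbar_lt (Rabs t) (CV_radius a) ->
  0 <= PSeries a t.
Proof. intros Ha Ht H. destruct (PhiR_PSeries a t H) as [Hc <-]. apply PhiR_nonneg; auto. Qed.

Lemma PSeries_derive_nonneg a t : (forall n, 0 <= a n) -> 0 <= t ->
  Rbar_lt (Rabs t) (CV_radius a) -> 0 <= PSeries (PS_derive a) t.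
Proof.
  intros Ha Ht H. apply PSeries_nonneg; auto; [|rewrite CV_radius_derive; auto].
  intros n. apply Rmult_le_pos; [apply pos_INR|apply Ha].
Qed.

Lemma ps_pow_finite_support_sum a M t : (forall n, (M < n)%nat -> a n = 0) ->
  forall k, infinite_sum (ps_term (ps_pow a k) t) ((sum_f_R0 (ps_term a t) M) ^ k).
Proof.
  intros Hz k. induction k as [|k IH].
  - replace (_ ^ 0) with (sum_f_R0 (ps_term ps_one t) O) by (unfold ps_term, ps_one; simpl; ring).
    apply finite_support_infinite_sum. intros [|n] Hn; [lia|]. unfold ps_term, ps_one. ring.
  - apply is_pseries_ps_term. simpl. change (ps_mul a (ps_pow a k)) with (PS_mult a (ps_pow a k)).
    apply is_pseries_mult.
    + apply is_pseries_ps_term, finite_support_infinite_sum.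
      intros n Hn. unfold ps_term. rewrite Hz; auto. ring.
    + apply is_pseries_ps_term, IH.
    + apply (finite_support_CV_radius a M Hz).
    + apply (finite_support_CV_radius _ (k * M) (ps_pow_finite_support a M Hz k)).
Qed.

Lemma Un_cv_sum_f_R0 (u : nat -> nat -> R) (l : nat -> R) K :
  (forall k, Un_cv (u k) (l k)) ->
  Un_cv (fun L => sum_f_R0 (fun k => u k L) K) (sum_f_R0 l K).
Proof.
  intros H. apply is_lim_seq_Reals. induction K as [|K IH]; cbn [sum_f_R0].
  - apply is_lim_seq_Reals, H.
  - apply is_lim_seq_plus'; auto. apply is_lim_seq_Reals, H.
Qed.

Lemma Un_cv_polynomial (f : ps) (u : nat -> R) y K : Un_cv u y ->
  Un_cv (fun n => sum_f_R0 (fun k => f k * u n ^ k) K) (sum_f_R0 (fun k => f k * y ^ k) K).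
Proof.
  intros Hu. apply (Un_cv_sum_f_R0 (fun k n => f k * u n ^ k)). intros k.
  apply is_lim_seq_Reals in Hu. apply is_lim_seq_Reals.
  apply (is_lim_seq_scal_l _ (f k) (Finite (y ^ k))).
  induction k as [|k IH]; [apply is_lim_seq_const|apply is_lim_seq_mult'; auto].
Qed.

Lemma ps_term_comp_expand f g t n N : g O = 0 -> (n <= N)%nat ->
  ps_term (ps_comp f g) t n = sum_f_R0 (fun k => f k * ps_term (ps_pow g k) t n) N.
Proof.
  intros Hg0 Hn. unfold ps_term at 1, ps_comp. rewrite Rmult_comm, <- sum_f_R0_mult_l.
  transitivity (sum_f_R0 (fun k => f k * ps_term (ps_pow g k) t n) n).
  - apply sum_eq. intros i _. unfold ps_term. ring.
  - symmetry. apply sum_f_R0_vanishing_tail; auto.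
    intros k Hk. unfold ps_term. rewrite (ps_pow_low_coef_zero g Hg0 k n Hk). ring.
Qed.

Section Composition.
Variables (f g : ps) (t : R).
Hypotheses (Hf : forall n, 0 <= f n) (Hg : forall n, 0 <= g n) (Hg0 : g O = 0) (Ht : 0 <= t).

Lemma ps_comp_nonneg n : 0 <= ps_comp f g n.
Proof.
  unfold ps_comp. apply sum_f_R0_nonneg_upto. intros k _.
  apply Rmult_le_pos; auto. apply ps_pow_nonneg; auto.
Qed.

(* Up to order N only the truncation of g matters, and the truncation is a polynomial. *)
Lemma ps_comp_partial_sum_le N :
  sum_f_R0 (ps_term (ps_comp f g) t) N <=
  sum_f_R0 (fun k => f k * (sum_f_R0 (ps_term g t) N) ^ k) N.
Proof.
  rewrite (sum_eq _ (fun n => sum_f_R0 (fun k => f k * ps_term (ps_pow g k) t n) N) N)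
    by (intros; apply ps_term_comp_expand; auto).
  rewrite (sum_f_R0_swap (fun k n => f k * ps_term (ps_pow g k) t n)).
  apply sum_Rle. intros k Hk. rewrite sum_f_R0_mult_l. apply Rmult_le_compat_l; auto.
  rewrite (sum_eq _ (ps_term (ps_pow (ps_trunc g N) k) t) N).
  - replace (sum_f_R0 (ps_term g t) N) with (sum_f_R0 (ps_term (ps_trunc g N) t) N).
    + apply sum_incr; [apply (ps_pow_finite_support_sum _ N t (ps_trunc_high g N))|].
      apply ps_term_nonneg; auto. apply ps_pow_nonneg. intros i. apply ps_trunc_bounds; auto.
    + apply sum_eq. intros i Hi. unfold ps_term. rewrite ps_trunc_low; auto.
  - intros n Hn. unfold ps_term. rewrite (ps_pow_ext_upto g (ps_trunc g N) N); auto.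
    intros i Hi. rewrite ps_trunc_low; auto.
Qed.

Lemma polynomial_le_PhiR_comp K M : ps_conv (ps_comp f g) t ->
  sum_f_R0 (fun k => f k * (sum_f_R0 (ps_term g t) M) ^ k) K <= PhiR (ps_comp f g) t.
Proof.
  intros Hc. set (G := sum_f_R0 (ps_term g t) M).
  assert (HG : G = sum_f_R0 (ps_term (ps_trunc g M) t) M).
  { apply sum_eq. intros i Hi. unfold ps_term. rewrite ps_trunc_low; auto. }
  apply (Un_cv_le_const
    (fun L => sum_f_R0 (fun k => f k * sum_f_R0 (ps_term (ps_pow (ps_trunc g M) k) t) L) K)).
  - apply (Un_cv_sum_f_R0 (fun k L => f k * sum_f_R0 (ps_term (ps_pow (ps_trunc g M) k) t) L)
                          (fun k => f k * G ^ k)).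
    intros k. apply is_lim_seq_Reals, (is_lim_seq_scal_l _ _ (Finite (G ^ k))).
    apply is_lim_seq_Reals. rewrite HG. apply (ps_pow_finite_support_sum _ M t (ps_trunc_high g M)).
  - intros L.
    apply Rle_trans with (sum_f_R0 (fun k => f k * sum_f_R0 (ps_term (ps_pow g k) t) L) K).
    { apply sum_Rle. intros k _. apply Rmult_le_compat_l; auto. apply sum_Rle. intros n _.
      apply Rmult_le_compat_r; [apply pow_le; auto|].
      apply ps_pow_le_compat. intros i. apply ps_trunc_bounds; auto. }
    apply Rle_trans with (sum_f_R0 (ps_term (ps_comp f g) t) L);
      [|apply partial_sum_le_PhiR; auto; apply ps_comp_nonneg].
    rewrite <- (sum_eq (fun k => sum_f_R0 (fun n => f k * ps_term (ps_pow g k) t n) L))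
      by (intros; apply sum_f_R0_mult_l).
    rewrite <- sum_f_R0_swap. apply sum_Rle. intros n Hn.
    rewrite (ps_term_comp_expand f g t n n Hg0 (le_n n)).
    apply sum_f_R0_le_vanishing_tail.
    + intros k. apply Rmult_le_pos; auto. apply ps_term_nonneg; auto. apply ps_pow_nonneg; auto.
    + intros k Hk. unfold ps_term. rewrite (ps_pow_low_coef_zero g Hg0 k n Hk). ring.
Qed.

Lemma ps_comp_conv : ps_conv g t -> ps_conv f (PhiR g t) ->
  ps_conv (ps_comp f g) t /\ PhiR (ps_comp f g) t <= PhiR f (PhiR g t).
Proof.
  intros Hcg Hcf. apply ps_conv_of_bounded_partial; auto; [apply ps_comp_nonneg|].
  intros N. eapply Rle_trans; [apply ps_comp_partial_sum_le|].
  eapply Rle_trans; [|apply (partial_sum_le_PhiR f Hf (PhiR g t) N); auto; apply PhiR_nonneg; auto].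
  apply sum_Rle. intros k _. apply Rmult_le_compat_l; auto. apply pow_incr. split.
  - apply sum_f_R0_nonneg_upto. intros; apply ps_term_nonneg; auto.
  - apply partial_sum_le_PhiR; auto.
Qed.

Lemma ps_comp_conv_inv : ps_conv g t -> ps_conv (ps_comp f g) t ->
  ps_conv f (PhiR g t) /\ PhiR f (PhiR g t) <= PhiR (ps_comp f g) t.
Proof.
  intros Hcg Hcc. apply ps_conv_of_bounded_partial; auto; [apply PhiR_nonneg; auto|].
  intros K. apply (Un_cv_le_const (fun M => sum_f_R0 (fun k => f k * (sum_f_R0 (ps_term g t) M) ^ k) K)).
  - apply Un_cv_polynomial, PhiR_spec, Hcg.
  - intros M. apply polynomial_le_PhiR_comp, Hcc.
Qed.

Lemma PhiR_ps_comp : ps_conv g t -> ps_conv f (PhiR g t) ->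
  ps_conv (ps_comp f g) t /\ PhiR (ps_comp f g) t = PhiR f (PhiR g t).
Proof.
  intros H1 H2. destruct (ps_comp_conv H1 H2) as [H3 H4]. split; auto.
  destruct (ps_comp_conv_inv H1 H3). lra.
Qed.

End Composition.

Lemma geometric_conv_lt_1 y : 0 <= y -> ps_conv (fun _ => 1) y -> y < 1.
Proof.
  intros Hy Hc. destruct (Rlt_or_le y 1) as [H|H]; auto. exfalso.
  destruct (INR_unbounded (PhiR (fun _ => 1) y)) as [N HN].
  assert (Hs : forall N, INR N + 1 <= sum_f_R0 (ps_term (fun _ => 1) y) N).
  { induction N0 as [|N0 IH]; cbn [sum_f_R0]; unfold ps_term in *; [simpl; lra|].
    rewrite S_INR. assert (1 <= y ^ S N0) by (apply pow_R1_Rle; lra). lra. }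
  pose proof (partial_sum_le_PhiR (fun _ => 1) (fun _ => Rle_0_1) y N Hy Hc).
  specialize (Hs N). lra.
Qed.

Lemma PhiR_geometric y : 0 <= y < 1 ->
  ps_conv (fun _ => 1) y /\ PhiR (fun _ => 1) y = 1 / (1 - y).
Proof.
  intros Hy. pose proof (GP_infinite y ltac:(rewrite Rabs_pos_eq; lra)) as H.
  split; [exists (/ (1 - y)); exact H|].
  rewrite (PhiR_eq _ _ _ H). field. lra.
Qed.

Lemma D_series_nonneg (F d : ps) : (forall n, 0 <= F n) -> is_D_series F d ->
  forall n, 0 <= d n.
Proof.
  intros HF [Hd0 Hd] n.
  assert (H : forall N i, (i <= N)%nat -> 0 <= d i).
  { induction N as [|N IH]; intros i Hi.
    - replace i with O by lia. rewrite Hd0; lra.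
    - destruct (Nat.eq_dec i (S N)) as [->|Hne]; [|apply IH; lia].
      rewrite Hd. unfold ps_comp. apply sum_f_R0_nonneg_upto. intros k Hk.
      apply Rmult_le_pos; [apply HF|apply (ps_pow_nonneg_upto d N); auto]. }
  apply (H n); lia.
Qed.

Lemma D_series_coef1 (F d : ps) : is_D_series F d -> d 1%nat = F O.
Proof. intros [Hd0 Hd]. rewrite Hd. unfold ps_comp. simpl. unfold ps_one. ring. Qed.

Lemma phi_of_geometric_comp (d : ps) : phi_of d = ps_comp (fun _ => 1) d.
Proof.
  apply functional_extensionality. intros n.
  unfold phi_of, ps_comp. apply sum_eq. intros; ring.
Qed.

Section DSeries.
Variables (F d : ps).
Hypotheses (HF : forall n, 0 <= F n) (HF0 : 0 < F O) (HD : is_D_series F d).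

Let Hd0 : d O = 0 := proj1 HD.
Let Hd : forall n, 0 <= d n := D_series_nonneg F d HF HD.

Lemma D_partial_sum_shift x N :
  sum_f_R0 (ps_term d x) (S N) = x * sum_f_R0 (ps_term (ps_comp F d) x) N.
Proof.
  rewrite sum_f_R0_shift. unfold ps_term at 1. rewrite Hd0, Rmult_0_l, Rplus_0_l.
  rewrite <- sum_f_R0_mult_l. apply sum_eq. intros i _. unfold ps_term.
  rewrite (proj2 HD). simpl. ring.
Qed.

Lemma D_conv_of_supersolution y x : 0 <= y -> ps_conv F y -> 0 <= x -> x * PhiR F y <= y ->
  ps_conv d x /\ PhiR d x <= y.
Proof.
  intros Hy Hc Hx Hxy. apply ps_conv_of_bounded_partial; auto. intros N.
  induction N as [|N IH]; [unfold ps_term; simpl; rewrite Hd0; lra|].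
  rewrite D_partial_sum_shift. apply Rle_trans with (x * PhiR F y); auto.
  apply Rmult_le_compat_l; auto.
  eapply Rle_trans; [apply ps_comp_partial_sum_le; auto|].
  eapply Rle_trans; [|apply (partial_sum_le_PhiR F HF y N Hy Hc)].
  apply sum_Rle. intros k _. apply Rmult_le_compat_l; auto. apply pow_incr. split; auto.
  apply sum_f_R0_nonneg_upto. intros; apply ps_term_nonneg; auto.
Qed.

Lemma D_fixpoint x : 0 <= x -> ps_conv d x ->
  ps_conv F (PhiR d x) /\ PhiR d x = x * PhiR F (PhiR d x).
Proof.
  intros Hx Hc. destruct (Req_dec x 0) as [->|Hx0].
  - assert (E : PhiR d 0 = 0).
    { apply PhiR_eq.
      replace 0 with (sum_f_R0 (ps_term d 0) 0) at 2 by (unfold ps_term; simpl; rewrite Hd0; ring).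
      apply finite_support_infinite_sum. intros [|n] Hn; [lia|]. unfold ps_term. simpl. ring. }
    rewrite E. split; [|ring].
    exists (sum_f_R0 (ps_term F 0) 0). apply finite_support_infinite_sum.
    intros [|n] Hn; [lia|]. unfold ps_term. simpl. ring.
  - assert (Hcc : ps_conv (ps_comp F d) x).
    { apply (ps_conv_of_bounded_partial _ (ps_comp_nonneg F d HF Hd) x (PhiR d x / x) Hx).
      intros N. apply (Rmult_le_reg_l x); [lra|]. field_simplify; [|lra].
      rewrite <- D_partial_sum_shift. apply partial_sum_le_PhiR; auto. }
    destruct (ps_comp_conv_inv F d x HF Hd Hd0 Hx Hc Hcc) as [HcF _].
    split; auto.
    rewrite <- (proj2 (PhiR_ps_comp F d x HF Hd Hd0 Hx Hc HcF)).
    assert (L1 := PhiR_spec d x Hc). assert (L2 := PhiR_spec _ x Hcc).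
    apply is_lim_seq_Reals, is_lim_seq_incr_1 in L1. apply is_lim_seq_Reals in L2.
    apply (is_lim_seq_scal_l _ x) in L2.
    apply (is_lim_seq_ext _ (fun n => sum_f_R0 (ps_term d x) (S n))) in L2;
      [|intros n; symmetry; apply D_partial_sum_shift].
    apply is_lim_seq_unique in L1. apply is_lim_seq_unique in L2.
    rewrite L1 in L2. injection L2. auto.
Qed.

Lemma D_ge_linear x : 0 <= x -> ps_conv d x -> x * F O <= PhiR d x.
Proof.
  intros Hx Hc. apply (PhiR_ge_partial_sum d Hd x _ 1 Hx Hc). unfold ps_term. simpl.
  rewrite Hd0, (D_series_coef1 F d HD). lra.
Qed.

Lemma D_strict_increasing x x' : 0 <= x < x' -> ps_conv d x' -> PhiR d x < PhiR d x'.
Proof.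
  intros Hx Hc. destruct (PhiR_increment_ge d Hd x x' Hx Hc) as [_ H].
  rewrite (D_series_coef1 F d HD) in H.
  assert (0 < F O * (x' - x)) by (apply Rmult_lt_0_compat; lra). lra.
Qed.

Lemma phi_of_nonneg n : 0 <= phi_of d n.
Proof. unfold phi_of. apply sum_f_R0_nonneg_upto. intros k _. apply ps_pow_nonneg, Hd. Qed.

Lemma D_le_phi_of n : 0 <= d n <= phi_of d n.
Proof.
  split; [apply Hd|]. destruct n as [|n]; [rewrite Hd0; apply phi_of_nonneg|].
  unfold phi_of. rewrite <- (ps_pow_1 d (S n)).
  apply (sum_f_R0_ge_term (fun k => ps_pow d k (S n)) 1 (S n)); [|lia].
  intros k. apply ps_pow_nonneg, Hd.
Qed.

Lemma phi_of_conv_iff x : 0 <= x ->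
  (ps_conv (phi_of d) x <-> ps_conv d x /\ PhiR d x < 1).
Proof.
  intros Hx. split.
  - intros Hc. assert (Hcd : ps_conv d x) by exact (proj1 (ps_conv_le_coef d _ x D_le_phi_of Hx Hc)).
    split; auto. rewrite phi_of_geometric_comp in Hc.
    apply geometric_conv_lt_1; [apply PhiR_nonneg; auto|].
    apply (ps_comp_conv_inv (fun _ => 1) d x (fun _ => Rle_0_1) Hd Hd0 Hx Hcd Hc).
  - intros [Hcd Hlt]. pose proof (PhiR_nonneg d Hd x Hx Hcd).
    rewrite phi_of_geometric_comp.
    apply (ps_comp_conv (fun _ => 1) d x (fun _ => Rle_0_1) Hd Hd0 Hx Hcd).
    apply PhiR_geometric. lra.
Qed.

Lemma PhiR_phi_of x : 0 <= x -> ps_conv d x -> PhiR d x < 1 ->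
  PhiR (phi_of d) x = 1 / (1 - PhiR d x).
Proof.
  intros Hx Hcd Hlt. pose proof (PhiR_nonneg d Hd x Hx Hcd).
  destruct (PhiR_geometric (PhiR d x) ltac:(lra)) as [Ho Hv].
  rewrite phi_of_geometric_comp, <- Hv.
  apply (PhiR_ps_comp (fun _ => 1) d x (fun _ => Rle_0_1) Hd Hd0 Hx Hcd Ho).
Qed.

End DSeries.

(** * Psi of phi in terms of Psi of phi_D *)

Section PsiPhi.
Variables (F d : ps) (x' : R).
Hypotheses (HF : forall n, 0 <= F n) (HF0 : 0 < F O) (HD : is_D_series F d)
  (Hx' : 0 < x') (Hc' : ps_conv (phi_of d) x').

Let Hd : forall n, 0 <= d n := D_series_nonneg F d HF HD.
Let Hcd' : ps_conv d x' /\ PhiR d x' < 1 :=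
  proj1 (phi_of_conv_iff F d HF HD x' (Rlt_le _ _ Hx')) Hc'.

Lemma D_below_CV_radius y : 0 <= y < x' -> Rbar_lt (Rabs y) (CV_radius d).
Proof. intros Hy. apply (Rabs_lt_CV_radius d y x' Hd); [rewrite Rabs_pos_eq|apply Hcd']; lra. Qed.

Lemma PSeries_D y : 0 <= y < x' -> ps_conv d y /\ PSeries d y = PhiR d y.
Proof. intros Hy. destruct (PhiR_PSeries d y (D_below_CV_radius y Hy)) as [Hc ->]. auto. Qed.

Lemma D_bounds_below y : 0 <= y < x' -> 0 <= PSeries d y < PhiR d x'.
Proof.
  intros Hy. destruct (PSeries_D y Hy) as [Hc ->]. split; [apply PhiR_nonneg; auto; lra|].
  apply (D_strict_increasing F d HF HF0 HD); [lra|apply Hcd'].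
Qed.

Lemma F_at_D_below_CV_radius y : 0 <= y < x' -> Rbar_lt (Rabs (PSeries d y)) (CV_radius F).
Proof.
  intros Hy. pose proof (D_bounds_below y Hy).
  apply (Rabs_lt_CV_radius F _ (PhiR d x') HF); [rewrite Rabs_pos_eq; lra|].
  apply (D_fixpoint F d HF HD x'); [lra|apply Hcd'].
Qed.

Lemma PSeries_D_fixpoint y : 0 <= y < x' -> PSeries d y = y * PSeries F (PSeries d y).
Proof.
  intros Hy. destruct (PhiR_PSeries F _ (F_at_D_below_CV_radius y Hy)) as [_ <-].
  destruct (PSeries_D y Hy) as [Hc ->]. apply (D_fixpoint F d HF HD y); [lra|auto].
Qed.

Lemma PSeries_phi_of y : 0 <= y < x' -> PSeries (phi_of d) y = / (1 - PSeries d y).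
Proof.
  intros Hy. pose proof (D_bounds_below y Hy). destruct (PSeries_D y Hy) as [Hc E].
  assert (Hr : Rbar_lt (Rabs y) (CV_radius (phi_of d))).
  { apply (Rabs_lt_CV_radius _ y x' (phi_of_nonneg F d HF HD)); auto. rewrite Rabs_pos_eq; lra. }
  destruct (PhiR_PSeries _ y Hr) as [_ <-]. rewrite (PhiR_phi_of F d HF HD y); try lra; auto.
  rewrite E. field. destruct Hcd'. lra.
Qed.

Let near_below_x' x : 0 < x < x' -> locally x (fun y => 0 <= y < x').
Proof. intros Hx. apply (locally_interval _ x 0 x'); simpl; try lra. intros y H1 H2; simpl in *; lra. Qed.

(* Differentiating D(y) = y F(D(y)). *)
Lemma D_derivative_eq x : 0 < x < x' ->
  PSeries (PS_derive d) x = PSeries F (PSeries d x) +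
    x * (PSeries (PS_derive d) x * PSeries (PS_derive F) (PSeries d x)).
Proof.
  intros Hx.
  assert (HdD : is_derive (PSeries d) x (PSeries (PS_derive d) x))
    by (apply is_derive_PSeries, D_below_CV_radius; lra).
  assert (HdF : is_derive (PSeries F) (PSeries d x) (PSeries (PS_derive F) (PSeries d x)))
    by (apply is_derive_PSeries, F_at_D_below_CV_radius; lra).
  assert (Hfix : is_derive (PSeries d) x
      (1 * PSeries F (PSeries d x) +
       x * (PSeries (PS_derive d) x * PSeries (PS_derive F) (PSeries d x)))).
  { apply (is_derive_ext_loc (fun y => y * PSeries F (PSeries d y))).
    - eapply filter_imp; [|apply near_below_x', Hx].
      intros y Hy. symmetry. apply PSeries_D_fixpoint, Hy.
    - exact (is_derive_mult (fun y => y) _ x _ _ (is_derive_id x)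
        (is_derive_comp (PSeries F) (PSeries d) x _ _ HdF HdD) ltac:(intros; apply Rmult_comm)). }
  pose proof (is_derive_unique _ _ _ HdD) as E1. pose proof (is_derive_unique _ _ _ Hfix) as E2.
  rewrite E1 in E2. lra.
Qed.

Lemma phi_of_derivative_eq x : 0 < x < x' ->
  PSeries (PS_derive (phi_of d)) x = PSeries (PS_derive d) x / (1 - PSeries d x) ^ 2.
Proof.
  intros Hx. pose proof (D_bounds_below x ltac:(lra)). destruct Hcd'.
  assert (HdP : is_derive (PSeries (phi_of d)) x (PSeries (PS_derive (phi_of d)) x)).
  { apply is_derive_PSeries.
    apply (Rabs_lt_CV_radius _ x x' (phi_of_nonneg F d HF HD)); auto. rewrite Rabs_pos_eq; lra. }
  assert (Hinv : is_derive (PSeries (phi_of d)) x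
      (- (0 - PSeries (PS_derive d) x) / (1 - PSeries d x) ^ 2)).
  { apply (is_derive_ext_loc (fun y => / (1 - PSeries d y))).
    - eapply filter_imp; [|apply near_below_x', Hx].
      intros y Hy. symmetry. apply PSeries_phi_of, Hy.
    - apply (is_derive_inv (fun y => 1 - PSeries d y)); [|lra].
      exact (is_derive_minus (fun _ => 1) (PSeries d) x 0 _ (is_derive_const 1 x)
        (is_derive_PSeries d x ltac:(apply D_below_CV_radius; lra))). }
  apply is_derive_unique in HdP. apply is_derive_unique in Hinv. rewrite HdP in Hinv.
  rewrite Hinv. field. lra.
Qed.

Lemma Psi_phi_of_eq x : 0 < x < x' ->
  0 < PhiR d x < 1 /\ 0 <= Psi F (PhiR d x) < 1 /\
  Psi (phi_of d) x = PhiR d x / ((1 - PhiR d x) * (1 - Psi F (PhiR d x))).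
Proof.
  intros Hx. destruct (PSeries_D x ltac:(lra)) as [Hcx ED]. rewrite <- ED.
  pose proof (D_bounds_below x ltac:(lra)). destruct Hcd'.
  pose proof (D_ge_linear F d HF HD x ltac:(lra) Hcx). rewrite <- ED in *.
  pose proof (PSeries_D_fixpoint x ltac:(lra)) as Efix.
  pose proof (D_derivative_eq x Hx) as ED'.
  pose proof (F_at_D_below_CV_radius x ltac:(lra)) as HrF.
  set (Dx := PSeries d x) in *. set (D' := PSeries (PS_derive d) x) in *.
  set (F' := PSeries (PS_derive F) Dx) in *.
  assert (HFD : F O <= PSeries F Dx).
  { destruct (PhiR_PSeries F Dx HrF) as [HcF <-]. apply PhiR_ge_coef0; auto; lra. }
  assert (HD' : 0 <= D') by (apply PSeries_derive_nonneg, D_below_CV_radius; auto; lra).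
  assert (HF' : 0 <= F') by (apply PSeries_derive_nonneg; auto; lra).
  assert (HxF : 0 < 1 - x * F').
  { destruct (Rle_or_lt (1 - x * F') 0) as [Hle|Hlt]; auto. nra. }
  assert (EPsiF : Psi F Dx = x * F').
  { rewrite Psi_PSeries by auto. fold F'. rewrite Efix at 1. field. lra. }
  assert (Hr : Rbar_lt (Rabs x) (CV_radius (phi_of d))).
  { apply (Rabs_lt_CV_radius _ x x' (phi_of_nonneg F d HF HD)); auto. rewrite Rabs_pos_eq; lra. }
  rewrite EPsiF, Psi_PSeries, phi_of_derivative_eq, PSeries_phi_of by (auto; lra). fold Dx D'.
  assert (0 < x * F O) by (apply Rmult_lt_0_compat; lra).
  split; [lra|]. split; [split; nra|].
  assert (Hprod : D' * (1 - x * F') = PSeries F Dx) by lra.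
  replace D' with (PSeries F Dx / (1 - x * F')) by (rewrite <- Hprod; field; lra).
  transitivity (x * PSeries F Dx / ((1 - Dx) * (1 - x * F'))); [field; repeat split; lra|].
  rewrite <- Efix. reflexivity.
Qed.

End PsiPhi.

Lemma ball_R_Rabs x e y : ball x e y <-> Rabs (y - x) < e.
Proof. unfold ball; simpl; unfold AbsRing_ball, abs, minus, plus, opp; simpl. tauto. Qed.

Lemma left_lim_Fin_filterlim r f l :
  left_lim (Fin r) f (Fin l) <-> filterlim f (at_left r) (locally l).
Proof.
  split.
  - intros H P [eps HP]. destruct (H eps (cond_pos eps)) as [del [Hdel Hf]].
    exists (mkposreal del Hdel). intros y Hy Hyr. apply HP, ball_R_Rabs.
    apply ball_R_Rabs, Rabs_lt_between in Hy. unfold minus, plus, opp in Hy; simpl in Hy. apply Hf. lra.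
  - intros H eps Heps.
    assert (Hl : locally l (fun y => Rabs (y - l) < eps)).
    { exists (mkposreal eps Heps). intros y Hy. apply ball_R_Rabs, Hy. }
    destruct (H _ Hl) as [del Hd]. exists del. split; [apply cond_pos|].
    intros t Ht. apply Hd; [apply ball_R_Rabs; rewrite Rabs_left|]; lra.
Qed.

Lemma left_lim_unique r f l1 l2 :
  left_lim (Fin r) f (Fin l1) -> left_lim (Fin r) f (Fin l2) -> l1 = l2.
Proof.
  intros H1 H2. apply left_lim_Fin_filterlim in H1, H2.
  assert (E := filterlim_locally_unique f l1 l2 H1 H2). exact E.
Qed.

Lemma left_lim_ext r f g l : 0 < r -> (forall x, 0 < x < r -> f x = g x) ->
  left_lim (Fin r) g l -> left_lim (Fin r) f l.
Proof.
  intros Hr E. assert (Hmin : forall del, 0 < del -> 0 < Rmin del r /\ Rmin del r <= del /\ Rmin del r <= r)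
    by (intros del Hdel; split; [apply Rmin_pos|split; [apply Rmin_l|apply Rmin_r]]; lra).
  destruct l as [l|]; simpl.
  - intros H eps Heps. destruct (H eps Heps) as [del [Hdel G]]. exists (Rmin del r).
    destruct (Hmin del Hdel) as (? & ? & ?). split; auto. intros t Ht. rewrite E by lra. apply G. lra.
  - intros H M. destruct (H M) as [del [Hdel G]]. exists (Rmin del r).
    destruct (Hmin del Hdel) as (? & ? & ?). split; auto. intros t Ht. rewrite E by lra. apply G. lra.
Qed.

Lemma left_lim_le r f l M : left_lim (Fin r) f (Fin l) ->
  (exists del, 0 < del /\ forall x, r - del < x < r -> f x <= M) -> l <= M.
Proof.
  intros H [del [Hdel Hf]]. destruct (Rle_or_lt l M) as [|Hlt]; auto. exfalso.
  destruct (H (l - M) ltac:(lra)) as [del' [Hdel' G]].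
  set (x := r - Rmin del del' / 2).
  assert (Rmin del del' <= del) by apply Rmin_l. assert (Rmin del del' <= del') by apply Rmin_r.
  assert (0 < Rmin del del') by (apply Rmin_pos; lra).
  specialize (G x ltac:(unfold x; lra)). specialize (Hf x ltac:(unfold x; lra)).
  apply Rabs_lt_between in G. lra.
Qed.

Lemma left_lim_ge r f l M : left_lim (Fin r) f (Fin l) ->
  (exists del, 0 < del /\ forall x, r - del < x < r -> M <= f x) -> M <= l.
Proof.
  intros H [del [Hdel Hf]]. destruct (Rle_or_lt M l) as [|Hlt]; auto. exfalso.
  destruct (H (M - l) ltac:(lra)) as [del' [Hdel' G]].
  set (x := r - Rmin del del' / 2).
  assert (Rmin del del' <= del) by apply Rmin_l. assert (Rmin del del' <= del') by apply Rmin_r.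
  assert (0 < Rmin del del') by (apply Rmin_pos; lra).
  specialize (G x ltac:(unfold x; lra)). specialize (Hf x ltac:(unfold x; lra)).
  apply Rabs_lt_between in G. lra.
Qed.

Lemma left_lim_continuous r u a h : continuity_pt h a ->
  left_lim (Fin r) u (Fin a) -> left_lim (Fin r) (fun x => h (u x)) (Fin (h a)).
Proof.
  intros Hh Hu. apply left_lim_Fin_filterlim in Hu. apply left_lim_Fin_filterlim.
  apply continuity_pt_filterlim in Hh. exact (filterlim_comp _ _ _ u h _ _ _ Hu Hh).
Qed.

Lemma left_lim_mult r u v a b :
  left_lim (Fin r) u (Fin a) -> left_lim (Fin r) v (Fin b) ->
  left_lim (Fin r) (fun x => u x * v x) (Fin (a * b)).
Proof.
  intros Hu Hv. apply left_lim_Fin_filterlim in Hu, Hv. apply left_lim_Fin_filterlim.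
  exact (filterlim_comp_2 _ _ (fun p q : R => mult p q) Hu Hv (filterlim_mult a b)).
Qed.

Lemma left_lim_rational r u v a b : a <> 1 -> b <> 1 ->
  left_lim (Fin r) u (Fin a) -> left_lim (Fin r) v (Fin b) ->
  left_lim (Fin r) (fun x => u x / ((1 - u x) * (1 - v x))) (Fin (a / ((1 - a) * (1 - b)))).
Proof.
  intros Ha Hb Hu Hv.
  assert (Hcont : forall c, c <> 1 -> continuity_pt (fun y => / (1 - y)) c)
    by (intros c Hc; apply continuity_pt_inv; [reg|lra]).
  pose proof (left_lim_mult r u (fun x => / (1 - u x) * / (1 - v x)) a (/ (1 - a) * / (1 - b)) Hu
    (left_lim_mult r _ _ _ _ (left_lim_continuous r u a _ (Hcont a Ha) Hu)
                            (left_lim_continuous r v b _ (Hcont b Hb) Hv))) as H.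
  unfold Rdiv. rewrite Rinv_mult, <- Rmult_assoc.
  replace (fun x => u x * / ((1 - u x) * (1 - v x))) with (fun x => u x * (/ (1 - u x) * / (1 - v x)))
    by (apply functional_extensionality; intros x; rewrite Rinv_mult; reflexivity).
  rewrite Rmult_assoc. exact H.
Qed.

Lemma continuity_pt_Rabs_lt f x0 eps : continuity_pt f x0 -> 0 < eps ->
  exists alp, 0 < alp /\ forall x, Rabs (x - x0) < alp -> Rabs (f x - f x0) < eps.
Proof.
  intros Hc Heps. destruct (Hc eps Heps) as [alp [Halp Hf]]. exists alp. split; auto.
  intros x Hx. destruct (Req_dec x x0) as [->|Hne].
  - rewrite Rminus_diag, Rabs_R0. auto.
  - apply Hf. split; [split; [exact I|auto]|]. exact Hx.
Qed.

Lemma continuity_pt_ge_of_right f a c e : continuity_pt f a -> 0 < e ->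
  (forall y, a < y < a + e -> c <= f y) -> c <= f a.
Proof.
  intros Hc He Hf. destruct (Rle_or_lt c (f a)) as [|Hlt]; auto. exfalso.
  destruct (continuity_pt_Rabs_lt f a (c - f a) Hc ltac:(lra)) as [alp [Halp G]].
  set (y := a + Rmin alp e / 2).
  assert (Rmin alp e <= alp) by apply Rmin_l. assert (Rmin alp e <= e) by apply Rmin_r.
  assert (0 < Rmin alp e) by (apply Rmin_pos; lra).
  specialize (Hf y ltac:(unfold y; lra)).
  specialize (G y ltac:(unfold y; rewrite Rabs_pos_eq; lra)). apply Rabs_lt_between in G. lra.
Qed.

Lemma pow_increment_le a b n : 0 <= a <= b -> b * (b ^ n - a ^ n) <= INR n * (b - a) * b ^ n.
Proof.
  intros Hab. induction n as [|n IH]; [simpl; lra|].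
  rewrite S_INR. simpl.
  assert (a ^ n <= b ^ n) by (apply pow_incr; lra).
  assert (0 <= a ^ n) by (apply pow_le; lra).
  assert (b * (b * (b ^ n - a ^ n)) <= b * (INR n * (b - a) * b ^ n)) by (apply Rmult_le_compat_l; lra).
  assert (b * a ^ n * (b - a) <= b * b ^ n * (b - a))
    by (apply Rmult_le_compat_r; [lra|apply Rmult_le_compat_l; lra]).
  replace (b * (b * b ^ n - a * a ^ n)) with (b * (b * (b ^ n - a ^ n)) + b * a ^ n * (b - a)) by ring.
  nra.
Qed.

Section PsiNonneg.
Variable w : ps.
Hypothesis Hw : forall n, 0 <= w n.

Let below_radius s t : 0 <= s <= t -> Rbar_lt (Rabs t) (CV_radius w) -> Rbar_lt (Rabs s) (CV_radius w).
Proof. intros Hst Hr. eapply Rbar_le_lt_trans; [|exact Hr]. simpl. rewrite !Rabs_pos_eq; lra. Qed.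

(* Termwise, [n w_n t^n - w_n t^n] is non-decreasing in [t]. *)
Lemma tDPhiR_minus_PhiR_le s t : 0 <= s <= t -> Rbar_lt (Rabs t) (CV_radius w) ->
  tDPhiR w s - PhiR w s <= tDPhiR w t - PhiR w t.
Proof.
  intros Hst Hr. pose proof (below_radius s t Hst Hr) as Hrs.
  apply (Un_cv_le (fun N => sum_f_R0 (fun n => INR n * w n * s ^ n) N - sum_f_R0 (ps_term w s) N)
                  (fun N => sum_f_R0 (fun n => INR n * w n * t ^ n) N - sum_f_R0 (ps_term w t) N)).
  - apply is_lim_seq_Reals, is_lim_seq_minus'; apply is_lim_seq_Reals.
    + rewrite tDPhiR_PSeries by auto. apply tDPhiR_infinite_sum; auto.
    + apply PhiR_spec, PhiR_PSeries, Hrs.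
  - apply is_lim_seq_Reals, is_lim_seq_minus'; apply is_lim_seq_Reals.
    + rewrite tDPhiR_PSeries by auto. apply tDPhiR_infinite_sum; auto.
    + apply PhiR_spec, PhiR_PSeries, Hr.
  - intros N. rewrite <- !minus_sum. apply sum_Rle. intros [|n] _; unfold ps_term; [simpl; lra|].
    rewrite S_INR. assert (s ^ S n <= t ^ S n) by (apply pow_incr; lra).
    pose proof (pos_INR n). pose proof (Hw (S n)).
    replace ((INR n + 1) * w (S n) * s ^ S n - w (S n) * s ^ S n) with (INR n * w (S n) * s ^ S n) by ring.
    replace ((INR n + 1) * w (S n) * t ^ S n - w (S n) * t ^ S n) with (INR n * w (S n) * t ^ S n) by ring.
    apply Rmult_le_compat_l; auto. apply Rmult_le_pos; auto.
Qed.

Lemma Psi_ge_1_mono s t : 0 <= s <= t -> Rbar_lt (Rabs t) (CV_radius w) ->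
  0 < PhiR w s -> 1 <= Psi w s -> 1 <= Psi w t.
Proof.
  intros Hst Hr Hs HPsi. pose proof (tDPhiR_minus_PhiR_le s t Hst Hr).
  destruct (PhiR_PSeries w t Hr) as [Hct _].
  assert (PhiR w s <= PhiR w t) by (apply ps_conv_le_t; auto).
  unfold Psi in *. apply Rle_div_r in HPsi; [|lra].
  apply Rle_div_r; lra.
Qed.

Lemma PhiR_increment_le s t : 0 <= s <= t -> Rbar_lt (Rabs t) (CV_radius w) ->
  t * (PhiR w t - PhiR w s) <= (t - s) * tDPhiR w t.
Proof.
  intros Hst Hr. pose proof (below_radius s t Hst Hr) as Hrs.
  rewrite tDPhiR_PSeries by auto.
  apply (Un_cv_le (fun N => t * (sum_f_R0 (ps_term w t) N - sum_f_R0 (ps_term w s) N))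
                  (fun N => (t - s) * sum_f_R0 (fun n => INR n * w n * t ^ n) N)).
  - apply is_lim_seq_Reals, (is_lim_seq_scal_l _ t (Finite (PhiR w t - PhiR w s))).
    apply is_lim_seq_minus'; apply is_lim_seq_Reals, PhiR_spec, PhiR_PSeries; auto.
  - apply is_lim_seq_Reals, (is_lim_seq_scal_l _ (t - s) (Finite _)).
    apply is_lim_seq_Reals, tDPhiR_infinite_sum, Hr.
  - intros N. rewrite <- minus_sum, <- !sum_f_R0_mult_l. apply sum_Rle. intros n _.
    unfold ps_term. pose proof (pow_increment_le s t n Hst).
    replace (t * (w n * t ^ n - w n * s ^ n)) with (w n * (t * (t ^ n - s ^ n))) by ring.
    replace ((t - s) * (INR n * w n * t ^ n)) with (w n * (INR n * (t - s) * t ^ n)) by ring.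
    apply Rmult_le_compat_l; auto.
Qed.

Lemma Psi_continuity_pt t : Rbar_lt (Rabs t) (CV_radius w) -> PSeries w t <> 0 ->
  continuity_pt (fun y => y * PSeries (PS_derive w) y / PSeries w y) t.
Proof.
  intros Hr Hne. apply continuity_pt_div; auto.
  - apply continuity_pt_mult; [apply derivable_continuous_pt, derivable_pt_id|].
    apply PSeries_continuity. rewrite CV_radius_derive. exact Hr.
  - apply PSeries_continuity, Hr.
Qed.

End PsiNonneg.

Lemma Psi_lower_bound w t0 t r : weight_seq w -> 0 < t0 <= t -> t < r -> ps_conv w r ->
  0 < 1 - w O / PhiR w t0 /\ 1 - w O / PhiR w t0 <= Psi w t.
Proof.
  intros [Hw [Hw0 [k [Hk Hwk]]]] Ht Htr Hc.
  assert (Hrt : Rbar_lt (Rabs t) (CV_radius w))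
    by (apply (Rabs_lt_CV_radius w t r Hw); auto; rewrite Rabs_pos_eq; lra).
  destruct (PhiR_PSeries w t Hrt) as [Hct _].
  destruct (ps_conv_le_t w Hw t0 t ltac:(lra) Hct) as [Hct0 HA].
  assert (HA0 : w O + w k * t0 ^ k <= PhiR w t0).
  { apply (PhiR_ge_partial_sum w Hw t0 _ k ltac:(lra) Hct0).
    pose proof (sum_f_R0_ge_first_and_term (ps_term w t0) k (ps_term_nonneg w Hw t0 ltac:(lra)) ltac:(lia)).
    unfold ps_term at 1 2 in H. simpl in H. lra. }
  assert (0 < w k * t0 ^ k) by (apply Rmult_lt_0_compat; auto; apply pow_lt; lra).
  assert (HB : PhiR w t - w O <= tDPhiR w t).
  { rewrite tDPhiR_PSeries by auto.
    apply (Un_cv_le (fun N => sum_f_R0 (ps_term w t) N - w O)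
                    (fun N => sum_f_R0 (fun n => INR n * w n * t ^ n) N)).
    - apply is_lim_seq_Reals, is_lim_seq_minus'; [|apply is_lim_seq_const].
      apply is_lim_seq_Reals, PhiR_spec, Hct.
    - apply tDPhiR_infinite_sum, Hrt.
    - intros N. induction N as [|N IH]; [unfold ps_term; simpl; lra|].
      rewrite !tech5. unfold ps_term at 2. rewrite S_INR.
      assert (0 <= INR N * w (S N) * t ^ S N)
        by (apply Rmult_le_pos; [apply Rmult_le_pos; [apply pos_INR|auto]|apply pow_le; lra]).
      lra. }
  replace (1 - w O / PhiR w t0) with ((PhiR w t0 - w O) / PhiR w t0) by (field; lra).
  split; [apply Rdiv_lt_0_compat; lra|].
  apply Rle_trans with ((PhiR w t - w O) / PhiR w t).
  - rewrite <- Rle_div_r by lra.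
    replace ((PhiR w t0 - w O) / PhiR w t0 * PhiR w t)
      with (PhiR w t - w O * (PhiR w t / PhiR w t0)) by (field; lra).
    assert (1 <= PhiR w t / PhiR w t0) by (apply Rle_div_r; lra).
    assert (w O * 1 <= w O * (PhiR w t / PhiR w t0)) by (apply Rmult_le_compat_l; lra).
    lra.
  - unfold Psi, Rdiv. apply Rmult_le_compat_r; [left; apply Rinv_0_lt_compat|]; lra.
Qed.

Section PhiRadius.
Variables (F d : ps).
Hypotheses (HF : forall n, 0 <= F n) (HF0 : 0 < F O) (HD : is_D_series F d).

Lemma phi_of_conv_somewhere tau : is_radius F tau -> tau <> Fin 0 ->
  exists x0, 0 < x0 /\ ps_conv (phi_of d) x0.
Proof.
  intros Hr Hne.
  assert (Hy : exists y, 0 < y < 1 /\ ps_conv F y).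
  { destruct tau as [t|].
    - destruct Hr as [Ht [Hin _]]. assert (t <> 0) by (intros ->; apply Hne; auto).
      exists (Rmin (1/2) (t/2)). assert (Rmin (1/2) (t/2) <= 1/2) by apply Rmin_l.
      assert (Rmin (1/2) (t/2) <= t/2) by apply Rmin_r.
      assert (0 < Rmin (1/2) (t/2)) by (apply Rmin_pos; lra).
      split; [lra|]. apply Hin. lra.
    - exists (1/2). split; [lra|]. apply Hr. lra. }
  destruct Hy as [y [Hy Hc]].
  assert (HFy : F O <= PhiR F y) by (apply PhiR_ge_coef0; auto; lra).
  assert (Hx0 : 0 < y / PhiR F y) by (apply Rdiv_lt_0_compat; lra).
  exists (y / PhiR F y). split; auto.
  destruct (D_conv_of_supersolution F d HF HD y (y / PhiR F y) ltac:(lra) Hc ltac:(lra))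
    as [Hcd Hle]; [right; field; lra|].
  apply (phi_of_conv_iff F d HF HD); [lra|]. split; auto. lra.
Qed.

(* phi converges at [x] only if [x F(0) <= D(x) < 1], so its domain of convergence is bounded. *)
Lemma phi_of_radius_Fin : (exists x0, 0 < x0 /\ ps_conv (phi_of d) x0) ->
  exists rho, 0 < rho /\ is_radius (phi_of d) (Fin rho).
Proof.
  intros [x0 [Hx0 Hc0]].
  set (E := fun x => 0 <= x /\ ps_conv (phi_of d) x).
  assert (Hb : bound E).
  { exists (1 / F O). intros x [Hx Hc].
    destruct (proj1 (phi_of_conv_iff F d HF HD x Hx) Hc) as [Hcd Hlt].
    pose proof (D_ge_linear F d HF HD x Hx Hcd).
    apply (Rmult_le_reg_r (F O)); auto. field_simplify; lra. }
  destruct (completeness E Hb (ex_intro _ x0 (conj (Rlt_le _ _ Hx0) Hc0))) as [rho [Hub Hlub]].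
  assert (Hr0 : x0 <= rho) by (apply Hub; split; auto; lra).
  exists rho. split; [lra|]. split; [lra|]. split.
  - intros x Hx.
    destruct (classic (exists z, E z /\ x < z)) as [[z [[Hz0 Hz] Hxz]]|Hn].
    + apply (ps_conv_le_t (phi_of d) (phi_of_nonneg F d HF HD) x z); auto. lra.
    + assert (rho <= x). { apply Hlub. intros z Hz. destruct (Rle_or_lt z x); auto. exfalso; eauto. }
      lra.
  - intros x Hx Hc. assert (x <= rho) by (apply Hub; split; auto; lra). lra.
Qed.

End PhiRadius.

Lemma is_radius_unique w r1 r2 : is_radius w r1 -> is_radius w r2 -> r1 = r2.
Proof.
  assert (Hfp : forall a, is_radius w (Fin a) -> is_radius w PInf -> False).
  { intros a [Ha [_ Hout]] Hinf. apply (Hout (a + 1)); [lra|]. apply Hinf. lra. }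
  destruct r1 as [a|], r2 as [b|]; intros H1 H2; auto; [|exfalso; eauto..].
  destruct H1 as [Ha [Hin1 Hout1]], H2 as [Hb [Hin2 Hout2]].
  destruct (Rtotal_order a b) as [Hab|[->|Hab]]; auto; exfalso.
  - apply (Hout1 ((a + b) / 2)); [lra|]. apply Hin2. lra.
  - apply (Hout2 ((a + b) / 2)); [lra|]. apply Hin1. lra.
Qed.

(** * Behaviour of D and phi at the radius of phi *)

Lemma left_lim_id r : left_lim (Fin r) (fun x => x) (Fin r).
Proof. intros eps Heps. exists eps. split; auto. intros t Ht. rewrite Rabs_left; lra. Qed.

Section PhiSingularity.
Variables (F d : ps) (rho : R).
Hypotheses (HF : forall n, 0 <= F n) (HF0 : 0 < F O) (HD : is_D_series F d)
  (Hr0 : 0 < rho) (Hrad : is_radius (phi_of d) (Fin rho)).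

Lemma D_below_rho x : 0 <= x < rho ->
  ps_conv d x /\ 0 <= PhiR d x < 1 /\ ps_conv F (PhiR d x) /\ PhiR d x = x * PhiR F (PhiR d x).
Proof.
  intros Hx. destruct Hrad as [_ [Hin _]].
  destruct (proj1 (phi_of_conv_iff F d HF HD x ltac:(lra)) (Hin x Hx)) as [Hc Hl].
  pose proof (PhiR_nonneg d (D_series_nonneg F d HF HD) x ltac:(lra) Hc).
  destruct (D_fixpoint F d HF HD x ltac:(lra) Hc). repeat split; auto; lra.
Qed.

Lemma D_increasing_below_rho x y : 0 <= x < y -> y < rho -> PhiR d x < PhiR d y.
Proof. intros Hxy Hy. apply (D_strict_increasing F d HF HF0 HD); [|apply D_below_rho]; lra. Qed.

Lemma Psi_phi_of_below_rho x : 0 < x < rho ->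
  0 < PhiR d x < 1 /\ 0 <= Psi F (PhiR d x) < 1 /\
  Psi (phi_of d) x = PhiR d x / ((1 - PhiR d x) * (1 - Psi F (PhiR d x))).
Proof.
  intros Hx. destruct Hrad as [_ [Hin _]].
  apply (Psi_phi_of_eq F d ((x + rho) / 2) HF HF0 HD); [lra|apply Hin; lra|lra].
Qed.

Lemma sup_D_below_rho : exists delta, 0 < delta <= 1 /\
  (forall x, 0 <= x < rho -> PhiR d x < delta) /\
  (forall eta, 0 < eta -> exists del, 0 < del <= rho /\
      forall x, rho - del < x < rho -> delta - eta < PhiR d x).
Proof.
  set (E := fun v => exists x, 0 <= x < rho /\ v = PhiR d x).
  assert (Hb : bound E).
  { exists 1. intros v [x [Hx ->]]. destruct (D_below_rho x Hx) as (_ & H & _). lra. }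
  destruct (completeness E Hb (ex_intro _ (PhiR d 0) (ex_intro _ 0 (conj (conj (Rle_refl 0) Hr0) eq_refl))))
    as [delta [Hub Hlub]].
  assert (Hmid : forall x, 0 <= x < rho -> PhiR d x < delta).
  { intros x Hx. pose proof (D_increasing_below_rho x ((x + rho)/2) ltac:(lra) ltac:(lra)).
    assert (PhiR d ((x + rho)/2) <= delta) by (apply Hub; exists ((x+rho)/2); split; auto; lra). lra. }
  exists delta. split; [split|split; auto].
  - pose proof (D_below_rho 0 ltac:(lra)) as (_ & ? & _). pose proof (Hmid 0 ltac:(lra)). lra.
  - apply Hlub. intros v [x [Hx ->]]. destruct (D_below_rho x Hx) as (_ & H & _). lra.
  - intros eta Heta.
    destruct (classic (exists x0, 0 <= x0 < rho /\ delta - eta < PhiR d x0)) as [[x0 [Hx0 Hlt]]|Hn].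
    + exists (rho - x0). split; [lra|].
      intros x Hx. destruct (Req_dec x x0) as [->|Hne]; auto.
      pose proof (D_increasing_below_rho x0 x ltac:(lra) ltac:(lra)). lra.
    + exfalso. assert (delta <= delta - eta); [|lra].
      apply Hlub. intros v [x [Hx ->]]. destruct (Rle_or_lt (PhiR d x) (delta - eta)); auto.
      exfalso. apply Hn. eauto.
Qed.

(* [Psi phi = D / ((1 - D) (1 - Psi_F(D)))] with [D] bounded away from 0 near [rho]. *)
Lemma Psi_phi_of_infinite_of :
  (forall eps, 0 < eps -> exists del, 0 < del /\ forall x, rho - del < x < rho ->
     (1 - PhiR d x) * (1 - Psi F (PhiR d x)) < eps) ->
  left_lim (Fin rho) (Psi (phi_of d)) PInf.
Proof.
  intros H M. set (c := PhiR d (rho / 2)).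
  assert (Hc : 0 < c) by (apply (Psi_phi_of_below_rho (rho / 2)); lra).
  destruct (H (c / (Rabs M + 1))) as [del [Hdel Hq]].
  { apply Rdiv_lt_0_compat; auto. pose proof (Rabs_pos M); lra. }
  exists (Rmin del (rho / 2)). split; [apply Rmin_pos; lra|].
  intros x Hx. assert (Rmin del (rho/2) <= del) by apply Rmin_l.
  assert (Rmin del (rho/2) <= rho/2) by apply Rmin_r.
  destruct (Psi_phi_of_below_rho x ltac:(lra)) as (HD1 & HP1 & ->).
  specialize (Hq x ltac:(lra)).
  assert (Hcx : c < PhiR d x) by (apply D_increasing_below_rho; lra).
  set (q := (1 - PhiR d x) * (1 - Psi F (PhiR d x))) in *.
  assert (Hq0 : 0 < q) by (unfold q; apply Rmult_lt_0_compat; lra).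
  apply (Rmult_lt_reg_r q); auto. unfold Rdiv. rewrite Rmult_assoc, Rinv_l, Rmult_1_r by lra.
  assert (M * q <= Rabs M * q) by (apply Rmult_le_compat_r; [lra|apply Rle_abs]).
  assert (Rabs M * q <= Rabs M * (c / (Rabs M + 1))) by (apply Rmult_le_compat_l; [apply Rabs_pos|lra]).
  assert (Rabs M * (c / (Rabs M + 1)) < c).
  { pose proof (Rabs_pos M). apply (Rmult_lt_reg_r (Rabs M + 1)); [lra|]. field_simplify; lra. }
  lra.
Qed.

Lemma Psi_phi_of_infinite_of_Psi_F L :
  left_lim (Fin rho) (fun x => Psi F (PhiR d x)) L -> ext_ge L (Fin 1) ->
  left_lim (Fin rho) (Psi (phi_of d)) PInf.
Proof.
  intros HL HL1. apply Psi_phi_of_infinite_of. intros eps Heps.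
  assert (Hnear : exists del, 0 < del /\ forall x, rho - del < x < rho -> 1 - eps < Psi F (PhiR d x)).
  { destruct L as [l|]; simpl in HL1.
    - destruct (HL eps Heps) as [del [Hdel G]]. exists del. split; auto.
      intros x Hx. specialize (G x Hx). apply Rabs_def2 in G. lra.
    - exact (HL (1 - eps)). }
  destruct Hnear as [del [Hdel Hp]].
  exists (Rmin del rho). split; [apply Rmin_pos; lra|]. intros x Hx.
  assert (Rmin del rho <= del) by apply Rmin_l. assert (Rmin del rho <= rho) by apply Rmin_r.
  destruct (Psi_phi_of_below_rho x ltac:(lra)) as (HD1 & HP1 & _). specialize (Hp x ltac:(lra)).
  assert ((1 - PhiR d x) * (1 - Psi F (PhiR d x)) <= 1 - Psi F (PhiR d x)).
  { rewrite <- (Rmult_1_l (1 - Psi F (PhiR d x))) at 2. apply Rmult_le_compat_r; lra. }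
  lra.
Qed.

Variable delta : R.
Hypotheses (Hdl : 0 < delta <= 1)
  (Hdlt : forall x, 0 <= x < rho -> PhiR d x < delta)
  (Happ : forall eta, 0 < eta -> exists del, 0 < del <= rho /\
      forall x, rho - del < x < rho -> delta - eta < PhiR d x).

Lemma left_lim_D_sup : left_lim (Fin rho) (PhiR d) (Fin delta).
Proof.
  intros eps Heps. destruct (Happ eps Heps) as [del [Hdel Hp]]. exists del. split; [lra|].
  intros x Hx. specialize (Hp x Hx). assert (PhiR d x < delta) by (apply Hdlt; lra).
  rewrite Rabs_left; lra.
Qed.

Lemma left_lim_comp_D f L : left_lim (Fin delta) f L ->
  left_lim (Fin rho) (fun x => f (PhiR d x)) L.
Proof.
  destruct L as [l|]; simpl.
  - intros H eps Heps. destruct (H eps Heps) as [del1 [Hdel1 H1]].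
    destruct (Happ del1 Hdel1) as [del [Hdel Hp]]. exists del. split; [lra|].
    intros x Hx. apply H1. split; [apply Hp; auto|apply Hdlt; lra].
  - intros H M. destruct (H M) as [del1 [Hdel1 H1]].
    destruct (Happ del1 Hdel1) as [del [Hdel Hp]]. exists del. split; [lra|].
    intros x Hx. apply H1. split; [apply Hp; auto|apply Hdlt; lra].
Qed.

Lemma Psi_phi_of_infinite_of_sup_D_1 : delta = 1 -> left_lim (Fin rho) (Psi (phi_of d)) PInf.
Proof.
  intros Hd1. apply Psi_phi_of_infinite_of. intros eps Heps.
  destruct (Happ eps Heps) as [del [Hdel Hp]]. exists del. split; [lra|]. intros x Hx.
  destruct (Psi_phi_of_below_rho x ltac:(lra)) as (HD1 & HP1 & _). specialize (Hp x Hx).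
  assert ((1 - PhiR d x) * (1 - Psi F (PhiR d x)) <= 1 - PhiR d x).
  { rewrite <- (Rmult_1_r (1 - PhiR d x)) at 2. apply Rmult_le_compat_l; lra. }
  lra.
Qed.

Lemma sup_D_le_radius t0 : is_radius F (Fin t0) -> delta <= t0.
Proof.
  intros [_ [_ Hout]]. destruct (Rle_or_lt delta t0) as [H|H]; auto. exfalso.
  destruct (Happ (delta - t0) ltac:(lra)) as [del [Hdel Hp]].
  set (x := rho - del / 2). specialize (Hp x ltac:(unfold x; lra)).
  destruct (D_below_rho x ltac:(unfold x; lra)) as (_ & _ & Hc & _).
  apply (Hout (PhiR d x)); auto. lra.
Qed.

Section BeyondSupD.
Variable y1 : R.
Hypotheses (Hy1 : delta < y1) (Hc1 : ps_conv F y1).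

Let below_y1 y : 0 <= y < y1 -> Rbar_lt (Rabs y) (CV_radius F).
Proof. intros Hy. apply (Rabs_lt_CV_radius F y y1 HF); auto. rewrite Rabs_pos_eq; lra. Qed.

Let PSeries_F_sup_D_pos : 0 < PSeries F delta.
Proof.
  destruct (PhiR_PSeries F delta (below_y1 delta ltac:(lra))) as [Hc <-].
  pose proof (PhiR_ge_coef0 F HF delta ltac:(lra) Hc). lra.
Qed.

(* Passing to the limit in [x F(D(x)) = D(x) < delta]. *)
Lemma rho_mul_F_sup_D_le : rho * PSeries F delta <= delta.
Proof.
  apply (left_lim_le rho (fun x => x * PSeries F (PhiR d x))).
  - apply left_lim_mult; [apply left_lim_id|].
    apply left_lim_continuous; [apply PSeries_continuity, below_y1; lra|apply left_lim_D_sup].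
  - exists rho. split; auto. intros x Hx.
    destruct (D_below_rho x ltac:(lra)) as (_ & HD0 & _ & Efix).
    assert (PhiR d x < delta) by (apply Hdlt; lra).
    destruct (PhiR_PSeries F _ (below_y1 (PhiR d x) ltac:(lra))) as [_ <-]. lra.
Qed.

(* Otherwise [x = y / F(y) > rho] would satisfy [x F(y) <= y < 1], so phi would converge at [x]. *)
Lemma F_growth_beyond_sup_D y : delta < y < Rmin 1 y1 -> y * PSeries F delta <= delta * PhiR F y.
Proof.
  intros Hy. assert (Rmin 1 y1 <= 1) by apply Rmin_l. assert (Rmin 1 y1 <= y1) by apply Rmin_r.
  pose proof rho_mul_F_sup_D_le.
  assert (Hcy : ps_conv F y) by (apply (ps_conv_le_t F HF y y1); auto; lra).
  assert (HFy : F O <= PhiR F y) by (apply PhiR_ge_coef0; auto; lra).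
  destruct (Rle_or_lt (y * PSeries F delta) (delta * PhiR F y)) as [Hq|Hq]; auto. exfalso.
  assert (Hrf : rho * PhiR F y < y).
  { assert (rho * PSeries F delta * PhiR F y <= delta * PhiR F y) by (apply Rmult_le_compat_r; lra).
    apply (Rmult_lt_reg_r (PSeries F delta)); nra. }
  set (x := y / PhiR F y).
  assert (Hx : rho < x).
  { unfold x. apply (Rmult_lt_reg_r (PhiR F y)); [lra|]. unfold Rdiv.
    rewrite Rmult_assoc, Rinv_l, Rmult_1_r; lra. }
  destruct (D_conv_of_supersolution F d HF HD y x ltac:(lra) Hcy ltac:(lra)) as [Hcdx Hle].
  { right. unfold x. field. lra. }
  destruct Hrad as [_ [_ Hout]]. apply (Hout x Hx).
  apply (phi_of_conv_iff F d HF HD x ltac:(lra)). split; auto. lra.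
Qed.

Lemma Psi_F_ge_1_beyond_sup_D y : delta < y < Rmin 1 y1 -> 1 <= Psi F y.
Proof.
  intros Hy. assert (Rmin 1 y1 <= y1) by apply Rmin_r.
  pose proof (below_y1 y ltac:(lra)) as Hry.
  destruct (PhiR_PSeries F delta (below_y1 delta ltac:(lra))) as [_ EA].
  pose proof (PhiR_increment_le F HF delta y ltac:(lra) Hry) as Hinc.
  pose proof (F_growth_beyond_sup_D y Hy) as Hgr. rewrite <- EA in Hgr.
  assert (HFy : 0 < PhiR F y).
  { destruct (PhiR_PSeries F y Hry) as [Hcy _]. pose proof (PhiR_ge_coef0 F HF y ltac:(lra) Hcy). lra. }
  assert (Hkey : (y - delta) * PhiR F y <= (y - delta) * tDPhiR F y) by lra.
  apply Rmult_le_reg_l in Hkey; [|lra].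
  unfold Psi. apply Rle_div_r; lra.
Qed.

Let Psi_F_eq y : 0 <= y < y1 -> Psi F y = y * PSeries (PS_derive F) y / PSeries F y.
Proof. intros Hy. apply Psi_PSeries, below_y1, Hy. Qed.

Lemma Psi_F_sup_D_ge_1 : delta < 1 -> 1 <= Psi F delta.
Proof.
  intros Hd1. assert (Hm : delta < Rmin 1 y1) by (apply Rmin_glb_lt; lra).
  rewrite Psi_F_eq by lra.
  apply (continuity_pt_ge_of_right (fun y => y * PSeries (PS_derive F) y / PSeries F y)
    delta 1 (Rmin 1 y1 - delta)); [| lra |].
  - apply Psi_continuity_pt; [apply below_y1; lra|apply Rgt_not_eq, PSeries_F_sup_D_pos].
  - intros y Hy. assert (Rmin 1 y1 <= y1) by apply Rmin_r.
    rewrite <- Psi_F_eq by lra. apply Psi_F_ge_1_beyond_sup_D. lra.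
Qed.

Lemma left_lim_Psi_F_D_beyond : left_lim (Fin rho) (fun x => Psi F (PhiR d x)) (Fin (Psi F delta)).
Proof.
  apply (left_lim_ext rho _ (fun x => (fun y => y * PSeries (PS_derive F) y / PSeries F y) (PhiR d x)));
    auto.
  - intros x Hx. destruct (D_below_rho x ltac:(lra)) as (_ & ? & _).
    apply Psi_F_eq. pose proof (Hdlt x ltac:(lra)). lra.
  - rewrite Psi_F_eq by lra.
    apply (left_lim_continuous rho (PhiR d) delta
      (fun y => y * PSeries (PS_derive F) y / PSeries F y)); [|apply left_lim_D_sup].
    apply Psi_continuity_pt; [apply below_y1; lra|apply Rgt_not_eq, PSeries_F_sup_D_pos].
Qed.

Lemma Psi_F_ge_1_eventually : delta < 1 ->
  exists s, delta < s < y1 /\ forall t, s <= t -> Rbar_lt (Rabs t) (CV_radius F) -> 1 <= Psi F t.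
Proof.
  intros Hd1. assert (Hm : delta < Rmin 1 y1) by (apply Rmin_glb_lt; lra).
  assert (Rmin 1 y1 <= y1) by apply Rmin_r.
  set (s := (delta + Rmin 1 y1) / 2). exists s. split; [unfold s; lra|].
  intros t Hst Hrt. apply (Psi_ge_1_mono F HF s t); auto; [unfold s in *; lra| |].
  - destruct (PhiR_PSeries F s (below_y1 s ltac:(unfold s; lra))) as [Hcs _].
    pose proof (PhiR_ge_coef0 F HF s ltac:(unfold s; lra) Hcs). lra.
  - apply Psi_F_ge_1_beyond_sup_D. unfold s; lra.
Qed.

End BeyondSupD.

Lemma F_conv_beyond_sup_D_or_radius tau : is_radius F tau ->
  (exists y1, delta < y1 /\ ps_conv F y1) \/ tau = Fin delta.
Proof.
  intros Hr. destruct tau as [t0|].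
  - pose proof (sup_D_le_radius t0 Hr) as Hle.
    destruct (Rle_lt_or_eq_dec _ _ Hle) as [Hlt| ->]; [left|right; auto].
    exists ((delta + t0) / 2). split; [lra|]. apply Hr. lra.
  - left. exists (delta + 1). split; [lra|]. apply Hr. lra.
Qed.

Lemma Psi_phi_of_infinite_at_rho tau : is_radius F tau ->
  (forall t0, tau = Fin t0 -> t0 < 1 -> exists L, ext_ge L (Fin 1) /\ left_lim (Fin t0) (Psi F) L) ->
  left_lim (Fin rho) (Psi (phi_of d)) PInf.
Proof.
  intros Hr Hlim. destruct (Req_dec delta 1) as [Hd1|Hd1];
    [apply Psi_phi_of_infinite_of_sup_D_1; auto|].
  destruct (F_conv_beyond_sup_D_or_radius tau Hr) as [[y1 [Hy1 Hc1]]| ->].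
  - apply (Psi_phi_of_infinite_of_Psi_F (Fin (Psi F delta))).
    + apply (left_lim_Psi_F_D_beyond y1); auto.
    + apply (Psi_F_sup_D_ge_1 y1); auto. lra.
  - destruct (Hlim delta eq_refl ltac:(lra)) as [L [HL1 HL]].
    apply (Psi_phi_of_infinite_of_Psi_F L); auto. apply left_lim_comp_D, HL.
Qed.

Lemma Psi_phi_of_finite_at_rho tau nu : is_radius F (Fin tau) -> tau < 1 -> nu < 1 ->
  left_lim (Fin tau) (Psi F) (Fin nu) ->
  left_lim (Fin rho) (Psi (phi_of d)) (Fin (tau / ((1 - tau) * (1 - nu)))).
Proof.
  intros Hr Htau Hnu Hlim.
  destruct (F_conv_beyond_sup_D_or_radius _ Hr) as [[y1 [Hy1 Hc1]]|Etau].
  - exfalso. pose proof (sup_D_le_radius tau Hr).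
    destruct (Psi_F_ge_1_eventually y1 Hy1 Hc1 ltac:(lra)) as [s [Hs HPsi]].
    assert (y1 <= tau) by (destruct (Rle_or_lt y1 tau); auto; exfalso; apply (proj2 (proj2 Hr) y1); auto).
    assert (1 <= nu); [|lra].
    apply (left_lim_ge tau (Psi F)); auto. exists (tau - s). split; [lra|].
    intros t Ht. apply HPsi; [lra|].
    apply (Rabs_lt_CV_radius F t ((t + tau) / 2) HF); [rewrite Rabs_pos_eq|apply Hr]; lra.
  - injection Etau as ->.
    apply (left_lim_ext rho _ (fun x => PhiR d x / ((1 - PhiR d x) * (1 - Psi F (PhiR d x))))); auto.
    + intros x Hx. apply Psi_phi_of_below_rho, Hx.
    + apply left_lim_rational; try lra; [apply left_lim_D_sup|apply left_lim_comp_D, Hlim].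
Qed.

End PhiSingularity.

Section NuPhi.
Variables (F d : ps).
Hypotheses (HF : forall n, 0 <= F n) (HF0 : 0 < F O) (HD : is_D_series F d).

Lemma nu_param_phi_of_intro tau L : is_radius F tau -> tau <> Fin 0 ->
  (forall rho, 0 < rho -> is_radius (phi_of d) (Fin rho) -> left_lim (Fin rho) (Psi (phi_of d)) L) ->
  nu_param (phi_of d) L.
Proof.
  intros Hr Hne Hlim.
  destruct (phi_of_radius_Fin F d HF HF0 HD (phi_of_conv_somewhere F d HF HF0 HD tau Hr Hne))
    as [rho [Hr0 Hrad]].
  right. exists (Fin rho). split; [auto|split; [intros E; injection E; lra|auto]].
Qed.

Lemma typeIa_phi_of_nu_infinite tau : is_radius F tau -> tau <> Fin 0 ->
  (forall t0, tau = Fin t0 -> t0 < 1 -> exists L, ext_ge L (Fin 1) /\ left_lim (Fin t0) (Psi F) L) ->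
  typeIa (phi_of d) /\ nu_param (phi_of d) PInf.
Proof.
  intros Hr Hne Hlim.
  assert (Hnu : nu_param (phi_of d) PInf).
  { apply (nu_param_phi_of_intro tau); auto. intros rho Hr0 Hrad.
    destruct (sup_D_below_rho F d rho HF HF0 HD Hr0 Hrad) as (delta & Hdl & Hdlt & Happ).
    eapply Psi_phi_of_infinite_at_rho; eauto. }
  split; auto. exists PInf. split; [auto|exact I].
Qed.

Lemma nu_param_phi_of_finite tau nu : is_radius F (Fin tau) -> 0 < tau < 1 -> nu < 1 ->
  left_lim (Fin tau) (Psi F) (Fin nu) ->
  nu_param (phi_of d) (Fin (tau / ((1 - tau) * (1 - nu)))).
Proof.
  intros Hr Htau Hnu Hlim. apply (nu_param_phi_of_intro (Fin tau)); auto.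
  - intros E. injection E. lra.
  - intros rho Hr0 Hrad.
    destruct (sup_D_below_rho F d rho HF HF0 HD Hr0 Hrad) as (delta & Hdl & Hdlt & Happ).
    eapply Psi_phi_of_finite_at_rho; eauto; lra.
Qed.

Lemma phi_of_radius_0 : is_radius F (Fin 0) -> is_radius (phi_of d) (Fin 0).
Proof.
  intros [_ [_ Hout]]. split; [lra|split; [intros t Ht; lra|]].
  intros t Ht Hc.
  destruct (proj1 (phi_of_conv_iff F d HF HD t ltac:(lra)) Hc) as [Hcd _].
  destruct (D_fixpoint F d HF HD t ltac:(lra) Hcd) as [HcF _].
  pose proof (D_ge_linear F d HF HD t ltac:(lra) Hcd).
  apply (Hout (PhiR d t)); auto. nra.
Qed.

End NuPhi.

(* Psi is bounded below by a positive constant away from 0, so its limit cannot vanish. *)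
Lemma typeIII_radius_0 w : weight_seq w -> typeIII w -> is_radius w (Fin 0).
Proof.
  intros HW [[Hr _]|[rho [Hr [Hne Hll]]]]; auto. exfalso.
  destruct rho as [r|].
  - destruct Hr as [Hr0 [Hin _]]. assert (Hrp : 0 < r) by (destruct Hr0; auto; subst; congruence).
    destruct (Psi_lower_bound w (r/2) (r/2) (3*r/4) HW ltac:(lra) ltac:(lra) (Hin (3*r/4) ltac:(lra)))
      as [Hc _].
    apply (left_lim_ge r (Psi w) 0 (1 - w O / PhiR w (r/2))) in Hll; [lra|].
    exists (r / 2). split; [lra|]. intros t Ht.
    apply (Psi_lower_bound w (r/2) t ((t + r)/2) HW); [lra|lra|apply Hin; lra].
  - destruct (Psi_lower_bound w 1 1 2 HW ltac:(lra) ltac:(lra) (Hr 2 ltac:(lra))) as [Hc _].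
    destruct (Hll _ Hc) as [A G].
    set (t := Rmax (A + 1) 1).
    assert (A + 1 <= t) by apply Rmax_l. assert (1 <= t) by apply Rmax_r.
    specialize (G t ltac:(lra)).
    destruct (Psi_lower_bound w 1 t (t + 1) HW ltac:(lra) ltac:(lra) (Hr (t + 1) ltac:(lra))) as [_ Hl].
    rewrite Rminus_0_r in G. apply Rabs_def2 in G. lra.
Qed.

Lemma typeII_limit w tau : typeII w -> is_radius w tau ->
  tau <> Fin 0 /\ exists nu, 0 < nu < 1 /\ left_lim tau (Psi w) (Fin nu).
Proof.
  intros [nu [Hnu [Hpos Hlt1]]] Hr. destruct nu as [nu|]; [|contradiction].
  destruct Hnu as [[_ E]|[rho [Hrho [Hne Hlim]]]]; [injection E as ->; simpl in Hpos; lra|].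
  rewrite (is_radius_unique w tau rho Hr Hrho). split; auto. exists nu. split; auto.
Qed.

Lemma nu_param_Fin_unique w tau nu nu' : is_radius w (Fin tau) -> 0 < tau ->
  left_lim (Fin tau) (Psi w) (Fin nu) -> nu_param w (Fin nu') -> nu' = nu.
Proof.
  intros Hr Htau Hlim [[Hr0 _]|[rho [Hrho [_ Hlim']]]].
  - pose proof (is_radius_unique w _ _ Hr Hr0) as E. injection E. lra.
  - rewrite <- (is_radius_unique w _ _ Hr Hrho) in Hlim'. exact (left_lim_unique tau _ _ _ Hlim' Hlim).
Qed.

Theorem mainTheorem15 (phiD d : ps) :
  weight_seq phiD -> is_D_series phiD d ->
  (* (1) *)
  (typeI phiD -> typeIa (phi_of d) /\ nu_param (phi_of d) PInf) /\
  (* (2) *)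
  (forall (tauD : ext) (nuD : R),
     typeII phiD -> is_radius phiD tauD -> nu_param phiD (Fin nuD) ->
     (* (a) *)
     (forall tau, tauD = Fin tau -> tau < 1 ->
        nu_param (phi_of d) (Fin (tau / ((1 - tau) * (1 - nuD))))) /\
     (* (b) *)
     (ext_ge tauD (Fin 1) ->
        typeIa (phi_of d) /\ nu_param (phi_of d) PInf)) /\
  (* (3) *)
  (typeIII phiD -> nu_param (phi_of d) (Fin 0) /\ typeIII (phi_of d)).
Proof.
  intros HW HD. pose proof HW as [HF [HF0 _]]. split; [|split].
  - intros [nu [[[_ ->]|[tau [Hr [Hne Hlim]]]] Hge]]; [simpl in Hge; lra|].
    apply (typeIa_phi_of_nu_infinite phiD d HF HF0 HD tau Hr Hne). intros t0 -> _. exists nu. auto.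
  - intros tauD nuD HII Hr HnuD.
    destruct (typeII_limit phiD tauD HII Hr) as [Hne [nu [Hnu Hlim]]]. split.
    + intros tau -> Htau.
      assert (Htau0 : 0 < tau) by (destruct Hr as [[|] _]; [lra|subst; congruence]).
      rewrite (nu_param_Fin_unique phiD tau nu nuD Hr Htau0 Hlim HnuD).
      apply (nu_param_phi_of_finite phiD d HF HF0 HD); auto. lra.
    + intros Hge. apply (typeIa_phi_of_nu_infinite phiD d HF HF0 HD tauD Hr Hne).
      intros t0 -> Ht0. simpl in Hge. lra.
  - intros HIII. pose proof (phi_of_radius_0 phiD d HF HF0 HD (typeIII_radius_0 phiD HW HIII)).
    split; left; auto.
Qed.
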